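(* Let $D$ be a finite strongly loopless category. Then the natural functor $j_D:\overline{\mathrm{Pro}}(\mathcal{C}^D) \to \overline{\mathrm{Pro}}(\mathcal{C})^{D}$ is an equivalence of categories; an explicit inverse equivalence $h_D:\overline{\mathrm{Pro}}(\mathcal{C})^{D}\to\overline{\mathrm{Pro}}(\mathcal{C}^D)$ is constructed.
   Context: A category $D$ is loopless if $Mor_D(d,d)=\{id_d\}$ for every object $d$, and strongly loopless if moreover only equal objects are isomorphic (e.g. $\Delta^n$). $\overline{\mathrm{Pro}}(\mathcal{C})$ has objects diagrams $F:A\to\mathcal{C}$ with $A$ a cofinite directed poset of infinite height (poset as category with $u\to v$ iff $u\ge v$), and morphisms $F^A\to G^B$ the classes $[\alpha,\phi]$ of pairs with $\alpha:B\to A$ strictly increasing and $\phi:F\circ\alpha\to G$ natural, identified along chains of relations $(\alpha',\phi')\ge(\alpha,\phi)$ ($\alpha'\ge\alpha$ pointwise and $\phi'_b=\phi_b\circ F(\alpha'(b)\to\alpha(b))$). The functor $j_D$ sends $X:A\to\mathcal{C}^D$ (viewed as $A\times D\to\mathcal{C}$) to $d\mapsto X(-,d)$ and $[\alpha,\phi]$ to the natural transformation with components $[\alpha,\phi(-,d)]$. *)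

From Stdlib Require Import List Relation_Operators.

Set Implicit Arguments.
Unset Strict Implicit.

Record Cat := {
  cobj :> Type;
  chom : cobj -> cobj -> Type;
  cid : forall a, chom a a;
  ccomp : forall a b e, chom b e -> chom a b -> chom a e;   (* ccomp g f = g o f *)
  ccomp_id_l : forall a b (f : chom a b), ccomp (cid b) f = f;
  ccomp_id_r : forall a b (f : chom a b), ccomp f (cid a) = f;
  ccomp_assoc : forall a b e x (f : chom a b) (g : chom b e) (h : chom e x),
      ccomp h (ccomp g f) = ccomp (ccomp h g) f
}.
Arguments chom : clear implicits.
Arguments cid {c} a.
Arguments ccomp {c a b e} _ _.

Definition FiniteCat (D : Cat) : Prop :=
  (exists l : list (cobj D), forall x, In x l) /\
  (forall a b : cobj D, exists l : list (chom D a b), forall f, In f l).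

Definition Loopless (D : Cat) : Prop :=
  forall (d : cobj D) (f : chom D d d), f = cid d.

Definition Isomorphic (D : Cat) (a b : cobj D) : Prop :=
  exists (f : chom D a b) (g : chom D b a), ccomp g f = cid a /\ ccomp f g = cid b.

Definition StronglyLoopless (D : Cat) : Prop :=
  Loopless D /\ forall a b : cobj D, Isomorphic a b -> a = b.

Record DirPoset := {
  pcar : Type;
  ple : pcar -> pcar -> Prop;
  ple_refl : forall u, ple u u;
  ple_trans : forall u v w, ple u v -> ple v w -> ple u w;
  ple_antisym : forall u v, ple u v -> ple v u -> u = v;
  pcofinite : forall u, exists l : list pcar, forall v, ple v u -> In v l;
  pdirected : forall u v, exists w, ple u w /\ ple v w;
  pinf_height : forall n : nat, exists c : nat -> pcar,
      forall i, i < n -> ple (c i) (c (S i)) /\ c i <> c (S i)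
}.

Arguments ple : clear implicits.
Definition plt (P : DirPoset) (u v : pcar P) : Prop := ple P u v /\ u <> v.

(* ---------- Categories whose morphisms are representatives modulo a relation ----
   Objects/morphisms are those satisfying the validity predicates; morphisms
   are identified along [sheq]. *)
Record SCat := {
  sobj : Type;
  sobj_ok : sobj -> Prop;
  shom : sobj -> sobj -> Type;
  shom_ok : forall a b, shom a b -> Prop;
  sheq : forall a b, shom a b -> shom a b -> Prop;
  sid : forall a, shom a a;
  scomp : forall a b e, shom b e -> shom a b -> shom a e
}.
Arguments shom : clear implicits.
Arguments sobj_ok {s} _.
Arguments shom_ok {s a b} _.
Arguments sheq {s a b} _ _.
Arguments sid {s} a.
Arguments scomp {s a b e} _ _.

Definition IsFunctor (E F : SCat) (fo : sobj E -> sobj F)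
  (fm : forall a b, shom E a b -> shom F (fo a) (fo b)) : Prop :=
  (forall a, sobj_ok a -> sobj_ok (fo a)) /\
  (forall a b (f : shom E a b), sobj_ok a -> sobj_ok b -> shom_ok f -> shom_ok (fm a b f)) /\
  (forall a b (f g : shom E a b), sobj_ok a -> sobj_ok b -> shom_ok f -> shom_ok g ->
      sheq f g -> sheq (fm a b f) (fm a b g)) /\
  (forall a, sobj_ok a -> sheq (fm a a (sid a)) (sid (fo a))) /\
  (forall a b c (f : shom E a b) (g : shom E b c), sobj_ok a -> sobj_ok b -> sobj_ok c ->
      shom_ok f -> shom_ok g -> sheq (fm a c (scomp g f)) (scomp (fm b c g) (fm a b f))).

Arguments IsFunctor : clear implicits.

Definition NatIso (A B : SCat) (P Q : sobj A -> sobj B)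
  (Pm : forall a b, shom A a b -> shom B (P a) (P b))
  (Qm : forall a b, shom A a b -> shom B (Q a) (Q b)) : Prop :=
  exists (eta : forall x, shom B (P x) (Q x)) (theta : forall x, shom B (Q x) (P x)),
    (forall x, sobj_ok x -> shom_ok (eta x) /\ shom_ok (theta x) /\
        sheq (scomp (theta x) (eta x)) (sid (P x)) /\
        sheq (scomp (eta x) (theta x)) (sid (Q x))) /\
    (forall x y (f : shom A x y), sobj_ok x -> sobj_ok y -> shom_ok f ->
        sheq (scomp (Qm x y f) (eta x)) (scomp (eta y) (Pm x y f))).

Arguments NatIso : clear implicits.

Definition IsEquivalence (E F : SCat) (jo : sobj E -> sobj F)
  (jm : forall a b, shom E a b -> shom F (jo a) (jo b)) : Prop :=
  IsFunctor E F jo jm /\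
  exists (ho : sobj F -> sobj E) (hm : forall a b, shom F a b -> shom E (ho a) (ho b)),
    IsFunctor F E ho hm /\
    NatIso E E (fun x => ho (jo x)) (fun x => x)
           (fun a b f => hm _ _ (jm a b f)) (fun a b f => f) /\
    NatIso F F (fun y => jo (ho y)) (fun y => y)
           (fun a b f => jm _ _ (hm a b f)) (fun a b f => f).
Arguments IsEquivalence : clear implicits.

Record FunObj (D : Cat) (E : SCat) := {
  fo : cobj D -> sobj E;
  fm : forall d d', chom D d d' -> shom E (fo d) (fo d')
}.
Arguments fo {D E} _ _.
Arguments fm {D E} _ {_ _} _.

Definition FunObj_ok D E (X : FunObj D E) : Prop :=
  (forall d, sobj_ok (fo X d)) /\
  (forall d d' (f : chom D d d'), shom_ok (fm X f)) /\
  (forall d, sheq (fm X (cid d)) (sid (fo X d))) /\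
  (forall d d' d'' (f : chom D d d') (g : chom D d' d''),
      sheq (fm X (ccomp g f)) (scomp (fm X g) (fm X f))).

Definition FunHom D E (X Y : FunObj D E) := forall d, shom E (fo X d) (fo Y d).

Definition FunHom_ok D E (X Y : FunObj D E) (eta : FunHom X Y) : Prop :=
  (forall d, shom_ok (eta d)) /\
  (forall d d' (f : chom D d d'), sheq (scomp (fm Y f) (eta d)) (scomp (eta d') (fm X f))).

Definition FunCat (D : Cat) (E : SCat) : SCat := {|
  sobj := FunObj D E;
  sobj_ok := @FunObj_ok D E;
  shom := @FunHom D E;
  shom_ok := @FunHom_ok D E;
  sheq := fun X Y (e1 e2 : FunHom X Y) => forall d, sheq (e1 d) (e2 d);
  sid := fun X d => sid (fo X d);
  scomp := fun X Y Z (e2 : FunHom Y Z) (e1 : FunHom X Y) d => scomp (e2 d) (e1 d)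
|}.

Record ProObj (C : Cat) := {
  pidx : DirPoset;
  pdiag : pcar pidx -> cobj C;
  (* u -> v iff u >= v *)
  pmap : forall u v : pcar pidx, ple pidx v u -> chom C (pdiag u) (pdiag v)
}.
Arguments pidx {C} _.
Arguments pdiag {C} _ _.
Arguments pmap {C} _ _ _ _.

Definition ProObj_ok C (X : ProObj C) : Prop :=
  (forall u (h : ple _ u u), pmap X u u h = cid (pdiag X u)) /\
  (forall u v w (h1 : ple _ v u) (h2 : ple _ w v) (h3 : ple _ w u),
      ccomp (pmap X v w h2) (pmap X u v h1) = pmap X u w h3).

Record ProHom C (X Y : ProObj C) := {
  palpha : pcar (pidx Y) -> pcar (pidx X);
  pphi : forall b, chom C (pdiag X (palpha b)) (pdiag Y b)
}.
Arguments palpha {C _ Y} _ _.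
Arguments pphi {C _ Y} _ _.

Definition ProHom_ok C (X Y : ProObj C) (p : ProHom X Y) : Prop :=
  (forall b b', plt b b' -> plt (palpha p b) (palpha p b')) /\
  (forall b b' (h : ple _ b' b) (h' : ple _ (palpha p b') (palpha p b)),
      ccomp (pmap Y b b' h) (pphi p b) = ccomp (pphi p b') (pmap X _ _ h')).

Definition ProHom_ge C (X Y : ProObj C) (p' p : ProHom X Y) : Prop :=
  (forall b, ple _ (palpha p b) (palpha p' b)) /\
  (forall b (h : ple _ (palpha p b) (palpha p' b)),
      pphi p' b = ccomp (pphi p b) (pmap X _ _ h)).

Definition ProHom_eq C (X Y : ProObj C) : ProHom X Y -> ProHom X Y -> Prop :=
  clos_refl_sym_trans _
    (fun p' p => ProHom_ok p' /\ ProHom_ok p /\ ProHom_ge p' p).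

Definition ProHom_id C (X : ProObj C) : ProHom X X :=
  {| palpha := fun b => b; pphi := fun b => cid (pdiag X b) |}.

Definition ProHom_comp C (X Y Z : ProObj C) (q : ProHom Y Z) (p : ProHom X Y) : ProHom X Z :=
  {| palpha := fun c => palpha p (palpha q c);
     pphi := fun c => ccomp (pphi q c) (pphi p (palpha q c)) |}.

Definition ProCat (C : Cat) : SCat := {|
  sobj := ProObj C;
  sobj_ok := @ProObj_ok C;
  shom := @ProHom C;
  shom_ok := @ProHom_ok C;
  sheq := @ProHom_eq C;
  sid := @ProHom_id C;
  scomp := @ProHom_comp C
|}.

(* ---------- \overline{Pro}(C^D): diagrams A -> C^D viewed as A x D -> C ---------- *)
Record ProDObj (C D : Cat) := {
  qidx : DirPoset;
  qdiag : pcar qidx -> cobj D -> cobj C;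
  qmap : forall (u v : pcar qidx), ple qidx v u ->
         forall d d' : cobj D, chom D d d' -> chom C (qdiag u d) (qdiag v d')
}.
Arguments qidx {C D} _.
Arguments qdiag {C D} _ _ _.
Arguments qmap {C D} _ _ _ _ _ _ _.

Definition ProDObj_ok C D (X : ProDObj C D) : Prop :=
  (forall u (h : ple _ u u) d, qmap X u u h d d (cid d) = cid (qdiag X u d)) /\
  (forall u v w (h1 : ple _ v u) (h2 : ple _ w v) (h3 : ple _ w u)
          d d' d'' (f : chom D d d') (g : chom D d' d''),
      ccomp (qmap X v w h2 d' d'' g) (qmap X u v h1 d d' f) = qmap X u w h3 d d'' (ccomp g f)).

Record ProDHom C D (X Y : ProDObj C D) := {
  qalpha : pcar (qidx Y) -> pcar (qidx X);
  qphi : forall b d, chom C (qdiag X (qalpha b) d) (qdiag Y b d)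
}.
Arguments qalpha {C D _ Y} _ _.
Arguments qphi {C D _ Y} _ _ _.

Definition ProDHom_ok C D (X Y : ProDObj C D) (p : ProDHom X Y) : Prop :=
  (forall b b', plt b b' -> plt (qalpha p b) (qalpha p b')) /\
  (forall b b' (h : ple _ b' b) (h' : ple _ (qalpha p b') (qalpha p b))
          d d' (f : chom D d d'),
      ccomp (qmap Y b b' h d d' f) (qphi p b d)
      = ccomp (qphi p b' d') (qmap X _ _ h' d d' f)).

Definition ProDHom_ge C D (X Y : ProDObj C D) (p' p : ProDHom X Y) : Prop :=
  (forall b, ple _ (qalpha p b) (qalpha p' b)) /\
  (forall b (h : ple _ (qalpha p b) (qalpha p' b)) d,
      qphi p' b d = ccomp (qphi p b d) (qmap X _ _ h d d (cid d))).

Definition ProDHom_eq C D (X Y : ProDObj C D) : ProDHom X Y -> ProDHom X Y -> Prop :=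
  clos_refl_sym_trans _
    (fun p' p => ProDHom_ok p' /\ ProDHom_ok p /\ ProDHom_ge p' p).

Definition ProDHom_id C D (X : ProDObj C D) : ProDHom X X :=
  {| qalpha := fun b => b; qphi := fun b d => cid (qdiag X b d) |}.

Definition ProDHom_comp C D (X Y Z : ProDObj C D) (q : ProDHom Y Z) (p : ProDHom X Y)
  : ProDHom X Z :=
  {| qalpha := fun c => qalpha p (qalpha q c);
     qphi := fun c d => ccomp (qphi q c d) (qphi p (qalpha q c) d) |}.

Definition ProDCat (C D : Cat) : SCat := {|
  sobj := ProDObj C D;
  sobj_ok := @ProDObj_ok C D;
  shom := @ProDHom C D;
  shom_ok := @ProDHom_ok C D;
  sheq := @ProDHom_eq C D;
  sid := @ProDHom_id C D;
  scomp := @ProDHom_comp C D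
|}.

Definition jD_at C D (X : ProDObj C D) (d : cobj D) : ProObj C := {|
  pidx := qidx X;
  pdiag := fun u => qdiag X u d;
  pmap := fun u v h => qmap X u v h d d (cid d)
|}.

Definition jD_atmor C D (X : ProDObj C D) (d d' : cobj D) (f : chom D d d')
  : ProHom (jD_at X d) (jD_at X d') :=
  @Build_ProHom C (jD_at X d) (jD_at X d') (fun u : pcar (qidx X) => u)
     (fun u : pcar (qidx X) => qmap X u u (@ple_refl (qidx X) u) d d' f).

Definition jD_obj C D (X : ProDObj C D) : sobj (FunCat D (ProCat C)) :=
  @Build_FunObj D (ProCat C) (jD_at X) (@jD_atmor C D X).

Definition jD_mor C D (X Y : ProDObj C D) (p : ProDHom X Y)
  : shom (FunCat D (ProCat C)) (jD_obj X) (jD_obj Y) :=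
  fun d => @Build_ProHom C (jD_at X d) (jD_at Y d) (qalpha p)
              (fun b : pcar (qidx Y) => qphi p b d).

(* Faithfulness and fullness of j_D only need D finite.  Equivalences of
   representatives are witnessed by common upper bounds, and a natural
   transformation j X -> j Y involves finitely many components and naturality
   squares; on a cofinite directed poset of infinite height every finite family
   of bounds is dominated by a strictly increasing index map ([majorant]), which
   merges all these witnesses into one level morphism.

   Essential surjectivity uses strong looplessness.  For Y : D -> Pro(C) the
   object h_D(Y) is indexed by the tuples (a_d)_d of indices of the Y(d) that are
   compatible with the index maps of the Y(f) for d <> d'.  Enough such tuples
   exist by well-founded recursion along "d' <> d receives a map from d", which
   is well founded since loops are identities and isomorphic objects are equal. *)

From Stdlib Require Import List Relation_Operators Classical ClassicalEpsilon
  FunctionalExtensionality ProofIrrelevance Arith Lia Wellfounded.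
Import ListNotations.

Set Implicit Arguments.
Unset Strict Implicit.

Definition decide (P : Prop) : {P} + {~ P} := excluded_middle_informative P.

Definition choose_if (A : Type) (P : A -> Prop) (dflt : A) : A :=
  match decide (exists x, P x) with
  | left H => proj1_sig (constructive_indefinite_description _ H)
  | right _ => dflt
  end.

Lemma choose_if_spec (A : Type) (P : A -> Prop) dflt : (exists x, P x) -> P (choose_if P dflt).
Proof.
  intros H. unfold choose_if. destruct (decide _) as [H' | N]; [| contradiction].
  apply (proj2_sig (constructive_indefinite_description _ H')).
Qed.

Section DirPosetFacts.
Variable P : DirPoset.

Lemma ple_plt_or_eq (u v : pcar P) : ple P u v -> plt u v \/ u = v.
Proof. intros H. destruct (classic (u = v)); [right | left; split]; auto. Qed.

Lemma plt_trans (u v w : pcar P) : plt u v -> plt v w -> plt u w.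
Proof.
  intros [H1 N1] [H2 N2]. split; [eapply ple_trans; eauto |].
  intros ->. apply N1, ple_antisym; auto.
Qed.

Definition pcar_witness : pcar P :=
  proj1_sig (constructive_indefinite_description _ (pinf_height P 0)) 0.

Lemma exists_upper_bound (l : list (pcar P)) : exists w, forall x, In x l -> ple P x w.
Proof.
  induction l as [|a l [w Hw]].
  - exists pcar_witness. intros _ [].
  - destruct (pdirected a w) as [z [Haz Hwz]]. exists z.
    intros x [<- | Hx]; [| eapply ple_trans]; eauto.
Qed.

Lemma chain_plt (c : nat -> pcar P) n :
  (forall i, i < n -> ple P (c i) (c (S i)) /\ c i <> c (S i)) ->
  forall i j, i < j -> j <= n -> plt (c i) (c j).
Proof.
  intros Hc i j Hij. induction Hij as [|j Hij IH]; intros Hj.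
  - split; apply Hc; lia.
  - eapply plt_trans; [apply IH; lia | split; apply Hc; lia].
Qed.

Lemma chain_NoDup (c : nat -> pcar P) n :
  (forall i, i < n -> ple P (c i) (c (S i)) /\ c i <> c (S i)) ->
  forall m k, k + m <= S n -> NoDup (map c (seq k m)).
Proof.
  intros Hc. induction m as [|m IH]; intros k Hk; simpl; constructor.
  - intros Hin. apply in_map_iff in Hin. destruct Hin as [j [Ej Hj]].
    apply in_seq in Hj. exact (proj2 (chain_plt Hc (i := k) (j := j) ltac:(lia) ltac:(lia)) (eq_sym Ej)).
  - apply IH. lia.
Qed.

(* A chain of length [n + 1] ending below [w] cannot fit into the [n]
   predecessors of [w], so some upper bound of it differs from [w]. *)
Lemma exists_strict_upper_bound (l : list (pcar P)) :
  exists z, forall x, In x l -> plt x z.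
Proof.
  destruct (exists_upper_bound l) as [w Hw].
  destruct (pcofinite w) as [lw Hlw].
  set (n := length lw).
  destruct (pinf_height P n) as [c Hc].
  destruct (pdirected w (c n)) as [z [Hwz Hcz]].
  assert (Hzw : z <> w).
  { intros ->.
    assert (Hincl : incl (map c (seq 0 (S n))) lw).
    { intros x Hx. apply in_map_iff in Hx. destruct Hx as [j [<- Hj]]. apply in_seq in Hj.
      apply Hlw. eapply ple_trans; [| exact Hcz].
      destruct (Nat.eq_dec j n) as [-> | Hjn]; [apply ple_refl | apply (chain_plt Hc); lia]. }
    pose proof (NoDup_incl_length (chain_NoDup Hc (m := S n) (k := 0) ltac:(lia)) Hincl) as Hlen.
    rewrite length_map, length_seq in Hlen. lia. }
  exists z. intros x Hx. split; [eapply ple_trans; eauto |].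
  intros ->. apply Hzw, ple_antisym; auto.
Qed.

Lemma plt_wf : well_founded (plt (P := P)).
Proof.
  assert (Hacc : forall n u, (forall l, NoDup l -> (forall v, In v l -> ple P v u) -> length l <= n) ->
                  Acc (plt (P := P)) u).
  { induction n as [|n IH]; intros u Hu.
    - exfalso. enough (1 <= 0) by lia.
      apply (Hu [u]); [repeat constructor; intros [] | intros v [<- | []]; apply ple_refl].
    - constructor. intros v [Hvu Nvu]. apply IH. intros l Hnd Hl.
      assert (Hnin : ~ In u l) by (intros Hin; apply Nvu, ple_antisym; auto).
      enough (S (length l) <= S n) by lia.
      apply (Hu (u :: l)); [constructor; auto |].
      intros x [<- | Hx]; [apply ple_refl | eapply ple_trans; eauto]. }
  intros u. destruct (pcofinite u) as [lu Hlu]. apply (Hacc (length lu)).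
  intros l Hnd Hl. apply NoDup_incl_length; auto. intros x Hx; auto.
Qed.

End DirPosetFacts.

Definition strict_ub (A : DirPoset) (l : list (pcar A)) : pcar A :=
  proj1_sig (constructive_indefinite_description _ (exists_strict_upper_bound l)).

Lemma strict_ub_spec (A : DirPoset) (l : list (pcar A)) x : In x l -> plt x (strict_ub l).
Proof. unfold strict_ub. destruct (constructive_indefinite_description _ _) as [z Hz]; auto. Qed.

Lemma ple_strict_ub (A : DirPoset) (l : list (pcar A)) x : In x l -> ple A x (strict_ub l).
Proof. intros H. apply (strict_ub_spec H). Qed.

Definition preds (B : DirPoset) (b : pcar B) : list (pcar B) :=
  proj1_sig (constructive_indefinite_description _ (pcofinite b)).

Lemma in_preds (B : DirPoset) (b v : pcar B) : ple B v b -> In v (preds b).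
Proof. unfold preds. destruct (constructive_indefinite_description _ _) as [z Hz]; auto. Qed.

Definition strictly_increasing (B A : DirPoset) (g : pcar B -> pcar A) : Prop :=
  forall b b', plt b b' -> plt (g b) (g b').

Lemma strictly_increasing_monotone (B A : DirPoset) (g : pcar B -> pcar A) :
  strictly_increasing g -> forall b b', ple B b b' -> ple A (g b) (g b').
Proof.
  intros H b b' Hb. destruct (ple_plt_or_eq Hb) as [Hl | <-]; [apply (H _ _ Hl) | apply ple_refl].
Qed.

(* [majorant F b] is chosen strictly above [F b] and above the values at the
   (finitely many) predecessors of [b], hence is strictly increasing in [b]. *)
Section Majorant.
Variables (B A : DirPoset) (F : pcar B -> list (pcar A)).

Definition majorant_step (b : pcar B) (rec : forall v, plt v b -> pcar A) : pcar A :=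
  strict_ub (F b ++ flat_map (fun v => match decide (plt v b) with
                                       | left H => [rec v H] | right _ => [] end) (preds b)).

Definition majorant : pcar B -> pcar A := Fix (@plt_wf B) (fun _ => pcar A) majorant_step.

Lemma majorant_eq b : majorant b = majorant_step (b := b) (fun v _ => majorant v).
Proof.
  unfold majorant. rewrite Fix_eq; [reflexivity |].
  intros x f g Hfg. f_equal. do 2 (apply functional_extensionality_dep; intro). auto.
Qed.

Lemma majorant_ge b x : In x (F b) -> ple A x (majorant b).
Proof. intros H. rewrite majorant_eq. apply ple_strict_ub, in_or_app; auto. Qed.

Lemma majorant_strictly_increasing : strictly_increasing majorant.
Proof.
  intros b' b H. rewrite (majorant_eq b). apply strict_ub_spec, in_or_app. right.
  apply in_flat_map. exists b'. split; [apply in_preds, H |].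
  destruct (decide (plt b' b)) as [_ | N]; [left; reflexivity | contradiction].
Qed.
End Majorant.

Record SCatLaws (E : SCat) : Prop := {
  sheq_refl : forall a b (f : shom E a b), sheq f f;
  sheq_sym : forall a b (f g : shom E a b), sheq f g -> sheq g f;
  sheq_trans : forall a b (f g h : shom E a b), sheq f g -> sheq g h -> sheq f h;
  sid_ok : forall a : sobj E, sobj_ok a -> shom_ok (sid a);
  scomp_ok : forall a b c (f : shom E a b) (g : shom E b c),
    sobj_ok a -> sobj_ok b -> sobj_ok c -> shom_ok f -> shom_ok g -> shom_ok (scomp g f);
  scomp_cong : forall a b c (f f' : shom E a b) (g g' : shom E b c),
    sobj_ok a -> sobj_ok b -> sobj_ok c -> shom_ok f -> shom_ok f' -> shom_ok g -> shom_ok g' ->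
    sheq f f' -> sheq g g' -> sheq (scomp g f) (scomp g' f');
  scomp_assoc : forall a b c e (f : shom E a b) (g : shom E b c) (h : shom E c e),
    sobj_ok a -> sobj_ok b -> sobj_ok c -> sobj_ok e -> shom_ok f -> shom_ok g -> shom_ok h ->
    sheq (scomp h (scomp g f)) (scomp (scomp h g) f);
  scomp_id_l : forall a b (f : shom E a b),
    sobj_ok a -> sobj_ok b -> shom_ok f -> sheq (scomp (sid b) f) f;
  scomp_id_r : forall a b (f : shom E a b),
    sobj_ok a -> sobj_ok b -> shom_ok f -> sheq (scomp f (sid a)) f
}.

Section SCatLawsFacts.
Variables (E : SCat) (L : SCatLaws E).

Lemma scomp_cong_l a b c (f : shom E a b) (g g' : shom E b c) : sheq g g' ->
  sobj_ok a -> sobj_ok b -> sobj_ok c -> shom_ok f -> shom_ok g -> shom_ok g' ->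
  sheq (scomp g f) (scomp g' f).
Proof. intros. apply (scomp_cong L); auto. apply (sheq_refl L). Qed.

Lemma scomp_cong_r a b c (f f' : shom E a b) (g : shom E b c) : sheq f f' ->
  sobj_ok a -> sobj_ok b -> sobj_ok c -> shom_ok f -> shom_ok f' -> shom_ok g ->
  sheq (scomp g f) (scomp g f').
Proof. intros. apply (scomp_cong L); auto. apply (sheq_refl L). Qed.

Lemma scomp_cancel a b c (x : shom E a b) (e' : shom E b c) (e : shom E c b) :
  sheq (scomp e e') (sid b) -> sobj_ok a -> sobj_ok b -> sobj_ok c ->
  shom_ok x -> shom_ok e' -> shom_ok e -> sheq (scomp e (scomp e' x)) x.
Proof.
  intros H Ha Hb Hc Hx He' He. eapply (sheq_trans L); [apply (scomp_assoc L); auto |].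
  eapply (sheq_trans L); [apply scomp_cong_l; eauto; apply (scomp_ok L) || apply (sid_ok L); auto |].
  apply (scomp_id_l L); auto.
Qed.
Lemma scomp_equiv_id_l a b (f : shom E a b) (g : shom E b b) : sheq g (sid b) ->
  sobj_ok a -> sobj_ok b -> shom_ok f -> shom_ok g -> sheq (scomp g f) f.
Proof.
  intros. eapply (sheq_trans L); [apply scomp_cong_l; eauto; apply (sid_ok L); auto |].
  apply (scomp_id_l L); auto.
Qed.

Lemma scomp_equiv_id_r a b (f : shom E a b) (g : shom E a a) : sheq g (sid a) ->
  sobj_ok a -> sobj_ok b -> shom_ok f -> shom_ok g -> sheq (scomp f g) f.
Proof.
  intros. eapply (sheq_trans L); [apply scomp_cong_r; eauto; apply (sid_ok L); auto |].
  apply (scomp_id_r L); auto.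
Qed.
End SCatLawsFacts.

Ltac ok_by L := repeat first [ assumption | apply (scomp_ok L) | apply (sid_ok L) ].

Lemma FunCat_laws (D : Cat) (E : SCat) : SCatLaws E -> SCatLaws (FunCat D E).
Proof.
  intros LE. split; simpl.
  - intros; apply (sheq_refl LE).
  - intros; apply (sheq_sym LE); auto.
  - intros; eapply (sheq_trans LE); eauto.
  - intros X [HX1 [HX2 _]]. split; [intro; apply (sid_ok LE); auto |].
    intros d d' f. simpl. eapply (sheq_trans LE); [apply (scomp_id_r LE); auto |].
    apply (sheq_sym LE), (scomp_id_l LE); auto.
  - intros X Y Z f g [X1 [X2 _]] [Y1 [Y2 _]] [Z1 [Z2 _]] [Hf1 Hf2] [Hg1 Hg2].
    split; [intro d; apply (scomp_ok LE); auto |].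
    intros d d' u. simpl.
    pose proof (X1 d). pose proof (X1 d'). pose proof (Y1 d). pose proof (Y1 d').
    pose proof (Z1 d). pose proof (Z1 d'). pose proof (X2 _ _ u). pose proof (Y2 _ _ u).
    pose proof (Z2 _ _ u). pose proof (Hf1 d). pose proof (Hf1 d'). pose proof (Hg1 d).
    pose proof (Hg1 d').
    eapply (sheq_trans LE); [apply (scomp_assoc LE); auto |].
    eapply (sheq_trans LE); [eapply (scomp_cong_l LE); [apply Hg2 | ok_by LE ..] |].
    eapply (sheq_trans LE); [apply (sheq_sym LE), (scomp_assoc LE); auto |].
    eapply (sheq_trans LE); [eapply (scomp_cong_r LE); [apply Hf2 | ok_by LE ..] |].
    apply (scomp_assoc LE); auto.
  - intros X Y Z f f' g g' HX HY HZ Hf Hf' Hg Hg' E1 E2 d.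
    apply (scomp_cong LE); auto; [apply HX | apply HY | apply HZ | apply Hf | apply Hf' | apply Hg | apply Hg'].
  - intros X Y Z W f g h HX HY HZ HW Hf Hg Hh d.
    apply (scomp_assoc LE); [apply HX | apply HY | apply HZ | apply HW | apply Hf | apply Hg | apply Hh].
  - intros X Y f HX HY Hf d. apply (scomp_id_l LE); [apply HX | apply HY | apply Hf].
  - intros X Y f HX HY Hf d. apply (scomp_id_r LE); [apply HX | apply HY | apply Hf].
Qed.

Unset Implicit Arguments.

Section FullyFaithfulEssSurj.
Variables (E F : SCat) (LE : SCatLaws E) (LF : SCatLaws F).
Variables (J : sobj E -> sobj F) (Jm : forall a b, shom E a b -> shom F (J a) (J b)).
Hypothesis HJ : IsFunctor E F J Jm.
Hypothesis J_faithful : forall a b (f g : shom E a b),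
  sobj_ok a -> sobj_ok b -> shom_ok f -> shom_ok g -> sheq (Jm a b f) (Jm a b g) -> sheq f g.
Variable J_pre : forall a b, shom F (J a) (J b) -> shom E a b.
Hypothesis J_pre_spec : forall a b (g : shom F (J a) (J b)), sobj_ok a -> sobj_ok b -> shom_ok g ->
  shom_ok (J_pre a b g) /\ sheq (Jm a b (J_pre a b g)) g.
Variable K : sobj F -> sobj E.
Hypothesis K_ok : forall y, sobj_ok y -> sobj_ok (K y).
Variables (eps : forall y, shom F (J (K y)) y) (eps' : forall y, shom F y (J (K y))).
Hypothesis eps_iso : forall y, sobj_ok y -> shom_ok (eps y) /\ shom_ok (eps' y) /\
  sheq (scomp (eps' y) (eps y)) (sid _) /\ sheq (scomp (eps y) (eps' y)) (sid y).

Let J_ok a : sobj_ok a -> sobj_ok (J a) := proj1 HJ a.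
Let Jm_ok a b f : sobj_ok a -> sobj_ok b -> shom_ok f -> shom_ok (Jm a b f) :=
  proj1 (proj2 HJ) a b f.
Let Jm_id a : sobj_ok a -> sheq (Jm a a (sid a)) (sid (J a)) :=
  proj1 (proj2 (proj2 (proj2 HJ))) a.
Let Jm_comp a b c f g := proj2 (proj2 (proj2 (proj2 HJ))) a b c f g.
Let eps_ok y (Hy : sobj_ok y) : shom_ok (eps y) := proj1 (eps_iso y Hy).
Let eps'_ok y (Hy : sobj_ok y) : shom_ok (eps' y) := proj1 (proj2 (eps_iso y Hy)).

Definition Km a b (g : shom F a b) : shom E (K a) (K b) :=
  J_pre (K a) (K b) (scomp (eps' b) (scomp g (eps a))).

Ltac solve_ok := repeat (match goal with |- ?g => assert_fails (has_evar g) end;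
  first [ assumption | apply (scomp_ok LF) | apply (sid_ok LF) | apply (scomp_ok LE)
        | apply (sid_ok LE) | apply J_ok | apply K_ok | apply Jm_ok | apply eps_ok | apply eps'_ok ]).

Lemma Km_spec a b (g : shom F a b) : sobj_ok a -> sobj_ok b -> shom_ok g ->
  shom_ok (Km a b g) /\ sheq (Jm _ _ (Km a b g)) (scomp (eps' b) (scomp g (eps a))).
Proof. intros. apply J_pre_spec; solve_ok. Qed.

Lemma K_functor : IsFunctor F E K Km.
Proof.
  split; [| split; [| split; [| split]]].
  - exact K_ok.
  - intros a b g Ha Hb Hg. apply Km_spec; auto.
  - intros a b g g' Ha Hb Hg Hg' Egg.
    destruct (Km_spec _ _ _ Ha Hb Hg) as [O1 E1], (Km_spec _ _ _ Ha Hb Hg') as [O2 E2].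
    apply J_faithful; solve_ok.
    eapply (sheq_trans LF); [apply E1 |]. eapply (sheq_trans LF); [| apply (sheq_sym LF), E2].
    apply (scomp_cong_r LF); solve_ok. apply (scomp_cong_l LF); solve_ok.
  - intros a Ha. destruct (Km_spec _ _ _ Ha Ha (sid_ok LF Ha)) as [O1 E1].
    destruct (eps_iso _ Ha) as [_ [_ [A3 _]]]. apply J_faithful; solve_ok.
    eapply (sheq_trans LF); [apply E1 |].
    eapply (sheq_trans LF); [| apply (sheq_sym LF), Jm_id; solve_ok].
    eapply (sheq_trans LF); [| apply A3].
    apply (scomp_cong_r LF); solve_ok. apply (scomp_id_l LF); solve_ok.
  - intros a b c f g Ha Hb Hc Hf Hg.
    destruct (eps_iso _ Hb) as [_ [_ [_ B4]]].
    destruct (Km_spec _ _ _ Ha Hb Hf) as [O1 E1], (Km_spec _ _ _ Hb Hc Hg) as [O2 E2].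
    destruct (Km_spec _ _ _ Ha Hc (scomp_ok LF Ha Hb Hc Hf Hg)) as [O3 E3].
    apply J_faithful; solve_ok.
    eapply (sheq_trans LF); [apply E3 |].
    eapply (sheq_trans LF); [| apply (sheq_sym LF), Jm_comp; solve_ok].
    apply (sheq_sym LF).
    eapply (sheq_trans LF); [eapply (scomp_cong LF); [.. | apply E1 | apply E2]; solve_ok |].
    eapply (sheq_trans LF); [apply (sheq_sym LF), (scomp_assoc LF); solve_ok |].
    apply (scomp_cong_r LF); solve_ok.
    eapply (sheq_trans LF); [apply (sheq_sym LF), (scomp_assoc LF); solve_ok |].
    eapply (sheq_trans LF); [apply (scomp_cong_r LF); [apply (scomp_cancel LF); [apply B4 | ..] | ..]; solve_ok |].
    apply (scomp_assoc LF); solve_ok.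
Qed.

Lemma unit_natiso :
  NatIso E E (fun x => K (J x)) (fun x => x) (fun a b f => Km _ _ (Jm a b f)) (fun a b f => f).
Proof.
  exists (fun x => J_pre (K (J x)) x (eps (J x))), (fun x => J_pre x (K (J x)) (eps' (J x))).
  split.
  - intros x Hx. assert (HJx := J_ok _ Hx).
    destruct (eps_iso _ HJx) as [A1 [A2 [A3 A4]]].
    destruct (J_pre_spec (K (J x)) x (eps (J x))) as [F1 G1]; solve_ok.
    destruct (J_pre_spec x (K (J x)) (eps' (J x))) as [F2 G2]; solve_ok.
    split; [| split; [| split]]; auto; apply J_faithful; solve_ok;
      (eapply (sheq_trans LF); [apply Jm_comp; solve_ok |]);
      (eapply (sheq_trans LF); [| apply (sheq_sym LF), Jm_id; solve_ok]).
    + eapply (sheq_trans LF); [| apply A3]. eapply (scomp_cong LF); [.. | apply G1 | apply G2]; solve_ok.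
    + eapply (sheq_trans LF); [| apply A4]. eapply (scomp_cong LF); [.. | apply G2 | apply G1]; solve_ok.
  - intros x y f Hx Hy Hf. assert (HJx := J_ok _ Hx). assert (HJy := J_ok _ Hy).
    destruct (eps_iso _ HJy) as [_ [_ [_ A4]]].
    destruct (J_pre_spec (K (J x)) x (eps (J x))) as [F1 G1]; solve_ok.
    destruct (J_pre_spec (K (J y)) y (eps (J y))) as [F2 G2]; solve_ok.
    destruct (Km_spec _ _ _ HJx HJy (Jm_ok _ _ _ Hx Hy Hf)) as [F3 G3].
    apply J_faithful; solve_ok.
    eapply (sheq_trans LF); [apply Jm_comp; solve_ok |].
    eapply (sheq_trans LF); [| apply (sheq_sym LF), Jm_comp; solve_ok].
    eapply (sheq_trans LF); [apply (scomp_cong_r LF); [apply G1 | ..]; solve_ok |].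
    eapply (sheq_trans LF); [| apply (sheq_sym LF), (scomp_cong LF); [.. | apply G3 | apply G2]; solve_ok].
    apply (sheq_sym LF), (scomp_cancel LF); [apply A4 | ..]; solve_ok.
Qed.

Lemma counit_natiso :
  NatIso F F (fun y => J (K y)) (fun y => y) (fun a b f => Jm _ _ (Km a b f)) (fun a b f => f).
Proof.
  exists eps, eps'. split; [intros y Hy; apply eps_iso; auto |].
  intros a b g Ha Hb Hg. destruct (eps_iso _ Hb) as [_ [_ [_ A4]]].
  destruct (Km_spec _ _ _ Ha Hb Hg) as [F3 G3].
  eapply (sheq_trans LF); [| apply (sheq_sym LF), (scomp_cong_r LF); [apply G3 | ..]; solve_ok].
  apply (sheq_sym LF), (scomp_cancel LF); [apply A4 | ..]; solve_ok.
Qed.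

Lemma equivalence_of_fully_faithful_ess_surj : IsEquivalence E F J Jm.
Proof.
  split; [exact HJ |]. exists K, Km.
  split; [exact K_functor | split; [exact unit_natiso | exact counit_natiso]].
Qed.
End FullyFaithfulEssSurj.

Set Implicit Arguments.

Section ProCatLaws.
Variable C : Cat.

Lemma pmap_irrel (X : ProObj C) u v h1 h2 : pmap X u v h1 = pmap X u v h2.
Proof. rewrite (proof_irrelevance _ h1 h2). reflexivity. Qed.

Lemma ccomp_pmap_irrel (X : ProObj C) u v h1 h2 e (k : chom C _ e) :
  ccomp k (pmap X u v h1) = ccomp k (pmap X u v h2).
Proof. rewrite (pmap_irrel h1 h2). reflexivity. Qed.

Lemma pmap_refl (X : ProObj C) (HX : ProObj_ok X) u h : pmap X u u h = cid _.
Proof. apply HX. Qed.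

Lemma pmap_comp (X : ProObj C) (HX : ProObj_ok X) u v w h1 h2 h3 :
  ccomp (pmap X v w h2) (pmap X u v h1) = pmap X u w h3.
Proof. apply HX. Qed.

Lemma pmap_comp_trans (X : ProObj C) (HX : ProObj_ok X) u v w (h1 : ple _ v u) (h2 : ple _ w v) :
  ccomp (pmap X v w h2) (pmap X u v h1) = pmap X u w (ple_trans h2 h1).
Proof. apply HX. Qed.

Lemma pmap_comp_trans_assoc (X : ProObj C) (HX : ProObj_ok X) u v w
  (h1 : ple _ v u) (h2 : ple _ w v) e (k : chom C e _) :
  ccomp (pmap X v w h2) (ccomp (pmap X u v h1) k) = ccomp (pmap X u w (ple_trans h2 h1)) k.
Proof. rewrite ccomp_assoc, pmap_comp_trans; auto. Qed.

Lemma ProHom_eq_pointwise (X Y : ProObj C) (a : pcar (pidx Y) -> pcar (pidx X))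
  (f g : forall b, chom C (pdiag X (a b)) (pdiag Y b)) :
  (forall b, f b = g b) -> ProHom_eq (Build_ProHom (palpha := a) f) (Build_ProHom (palpha := a) g).
Proof.
  intros H. replace g with f; [apply rst_refl |]. apply functional_extensionality_dep; auto.
Qed.

Lemma ProHom_ok_monotone (X Y : ProObj C) (p : ProHom X Y) : ProHom_ok p ->
  forall b b', ple _ b b' -> ple _ (palpha p b) (palpha p b').
Proof. intros [H _]. exact (strictly_increasing_monotone H). Qed.

Lemma ProHom_ge_refl (X Y : ProObj C) (HX : ProObj_ok X) (p : ProHom X Y) : ProHom_ge p p.
Proof. split; [intros; apply ple_refl |]. intros b h. rewrite pmap_refl, ccomp_id_r; auto. Qed.

Lemma ProHom_ge_trans (X Y : ProObj C) (HX : ProObj_ok X) (r q p : ProHom X Y) :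
  ProHom_ge r q -> ProHom_ge q p -> ProHom_ge r p.
Proof.
  intros [A1 B1] [A2 B2]. split; [intros b; eapply ple_trans; eauto |].
  intros b h. rewrite (B1 b (A1 b)), (B2 b (A2 b)), <- ccomp_assoc. f_equal. apply HX.
Qed.

Definition ProHom_lift (X Y : ProObj C) (q : ProHom X Y) (g : pcar (pidx Y) -> pcar (pidx X))
  (Hg : forall b, ple _ (palpha q b) (g b)) : ProHom X Y :=
  Build_ProHom (palpha := g) (fun b => ccomp (pphi q b) (pmap X (g b) (palpha q b) (Hg b))).
Arguments ProHom_lift {X Y} q g Hg.

Lemma ProHom_ge_lift (X Y : ProObj C) (HX : ProObj_ok X) (q r : ProHom X Y) g Hg :
  ProHom_ge r q -> (forall b, ple _ (palpha r b) (g b)) -> ProHom_ge (ProHom_lift q g Hg) r.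
Proof.
  intros [A1 B1] Hr. split; auto. intros b h. simpl.
  rewrite (B1 b (A1 b)), <- ccomp_assoc. f_equal. symmetry. apply HX.
Qed.

Lemma ProHom_ok_lift (X Y : ProObj C) (HX : ProObj_ok X) (q : ProHom X Y) g Hg :
  ProHom_ok q -> strictly_increasing g -> ProHom_ok (ProHom_lift q g Hg).
Proof.
  intros Hq Hg'. split; auto. intros b b' h h'. simpl.
  rewrite ccomp_assoc, (proj2 Hq b b' h (ProHom_ok_monotone Hq h)), <- !ccomp_assoc.
  f_equal. rewrite !(pmap_comp HX _ _ (ple_trans (Hg b') h')). reflexivity.
Qed.

Definition ProHom_ub (X Y : ProObj C) (p q : ProHom X Y) : Prop :=
  exists r, ProHom_ge r p /\ ProHom_ge r q.

Lemma ProHom_ub_eq (X Y : ProObj C) (HX : ProObj_ok X) (p q : ProHom X Y) :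
  ProHom_ok p -> ProHom_ok q -> ProHom_ub p q -> ProHom_eq p q.
Proof.
  intros Hp Hq [r [Hrp Hrq]].
  set (g := majorant (fun b => [palpha r b])).
  assert (Hgr : forall b, ple _ (palpha r b) (g b)) by (intros b; apply majorant_ge; left; auto).
  assert (Hg : forall b, ple _ (palpha p b) (g b)) by (intros b; eapply ple_trans; [apply Hrp | apply Hgr]).
  set (s := ProHom_lift p g Hg).
  assert (Hs : ProHom_ok s) by (apply ProHom_ok_lift, majorant_strictly_increasing; auto).
  assert (Hsr : ProHom_ge s r) by (apply ProHom_ge_lift; auto).
  apply rst_trans with s; [apply rst_sym |]; apply rst_step;
    (split; [| split]); auto; eapply ProHom_ge_trans; eauto.
Qed.

Lemma ProHom_ub_trans (X Y : ProObj C) (HX : ProObj_ok X) (p q t : ProHom X Y) :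
  ProHom_ub p q -> ProHom_ub q t -> ProHom_ub p t.
Proof.
  intros [r1 [H1 H2]] [r2 [H3 H4]].
  set (g := majorant (fun b => [palpha r1 b; palpha r2 b])).
  assert (G1 : forall b, ple _ (palpha r1 b) (g b)) by (intros b; apply majorant_ge; simpl; auto).
  assert (G2 : forall b, ple _ (palpha r2 b) (g b)) by (intros b; apply majorant_ge; simpl; auto).
  assert (Hg : forall b, ple _ (palpha q b) (g b)) by (intros b; eapply ple_trans; [apply H2 | apply G1]).
  exists (ProHom_lift q g Hg).
  split; eapply ProHom_ge_trans; eauto; apply ProHom_ge_lift; auto.
Qed.

Lemma ProHom_eq_ub (X Y : ProObj C) (HX : ProObj_ok X) (p q : ProHom X Y) :
  ProHom_eq p q -> ProHom_ub p q.
Proof.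
  induction 1 as [x y [_ [_ H]] | x | x y _ [r [H1 H2]] | x y z _ IH1 _ IH2].
  - exists x. split; auto. apply ProHom_ge_refl; auto.
  - exists x. split; apply ProHom_ge_refl; auto.
  - exists r; auto.
  - eapply ProHom_ub_trans; eauto.
Qed.

Lemma ProHom_comp_ok (X Y Z : ProObj C) (p : ProHom X Y) (q : ProHom Y Z) :
  ProHom_ok p -> ProHom_ok q -> ProHom_ok (ProHom_comp q p).
Proof.
  intros Hp Hq. split; [intros b b' H; apply Hp, Hq, H |].
  intros c c' h h'. simpl.
  rewrite ccomp_assoc, (proj2 Hq c c' h (ProHom_ok_monotone Hq h)), <- !ccomp_assoc.
  f_equal. apply Hp.
Qed.

Lemma ProHom_ge_comp_r (X Y Z : ProObj C) (p r : ProHom X Y) (q : ProHom Y Z) :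
  ProHom_ge r p -> ProHom_ge (ProHom_comp q r) (ProHom_comp q p).
Proof.
  intros [A1 B1]. split; [intros; apply A1 |]. intros c h. simpl.
  rewrite (B1 _ (A1 _)), ccomp_assoc. f_equal. apply pmap_irrel.
Qed.

Lemma ProHom_ge_comp_l (X Y Z : ProObj C) (p : ProHom X Y) (q r : ProHom Y Z) :
  ProHom_ok p -> ProHom_ge r q -> ProHom_ge (ProHom_comp r p) (ProHom_comp q p).
Proof.
  intros Hp [A1 B1]. split; [intros c; apply (ProHom_ok_monotone Hp), A1 |]. intros c h. simpl.
  rewrite (B1 _ (A1 _)), <- !ccomp_assoc. f_equal. apply Hp.
Qed.

Lemma ProHom_comp_cong (X Y Z : ProObj C) (HX : ProObj_ok X) (HY : ProObj_ok Y)
  (p p' : ProHom X Y) (q q' : ProHom Y Z) :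
  ProHom_ok p -> ProHom_ok p' -> ProHom_ok q -> ProHom_ok q' ->
  ProHom_eq p p' -> ProHom_eq q q' -> ProHom_eq (ProHom_comp q p) (ProHom_comp q' p').
Proof.
  intros Hp Hp' Hq Hq' E1 E2. apply ProHom_ub_eq; auto using ProHom_comp_ok.
  apply ProHom_ub_trans with (ProHom_comp q p'); auto.
  - destruct (ProHom_eq_ub HX E1) as [r [H1 H2]].
    exists (ProHom_comp q r). split; apply ProHom_ge_comp_r; auto.
  - destruct (ProHom_eq_ub HY E2) as [r [H1 H2]].
    exists (ProHom_comp r p'). split; apply ProHom_ge_comp_l; auto.
Qed.

Lemma ProCat_laws : SCatLaws (ProCat C).
Proof.
  split; simpl.
  - intros; apply rst_refl.
  - intros; apply rst_sym; auto.
  - intros; eapply rst_trans; eauto.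
  - intros a Ha. split; [intros b b' H; exact H |]. intros b b' h h'. simpl.
    rewrite ccomp_id_l, ccomp_id_r. apply pmap_irrel.
  - intros. apply ProHom_comp_ok; auto.
  - intros. apply ProHom_comp_cong; auto.
  - intros. apply ProHom_eq_pointwise. intros; simpl; apply ccomp_assoc.
  - intros a b [fa fp] _ _ _. apply ProHom_eq_pointwise. intros; apply ccomp_id_l.
  - intros a b [fa fp] _ _ _. apply ProHom_eq_pointwise. intros; apply ccomp_id_r.
Qed.
End ProCatLaws.
Arguments ProHom_lift {C X Y} q g Hg.

Section ProDCatLaws.
Variables C D : Cat.

Lemma qmap_irrel (X : ProDObj C D) u v h1 h2 d d' f : qmap X u v h1 d d' f = qmap X u v h2 d d' f.
Proof. rewrite (proof_irrelevance _ h1 h2). reflexivity. Qed.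

Lemma qmap_comp (X : ProDObj C D) (HX : ProDObj_ok X) u v w h1 h2 h3 d d' d'' f g :
  ccomp (qmap X v w h2 d' d'' g) (qmap X u v h1 d d' f) = qmap X u w h3 d d'' (ccomp g f).
Proof. apply HX. Qed.

Lemma qmap_comp_id (X : ProDObj C D) (HX : ProDObj_ok X) u v w h1 h2 h3 d :
  ccomp (qmap X v w h2 d d (cid d)) (qmap X u v h1 d d (cid d)) = qmap X u w h3 d d (cid d).
Proof. rewrite (qmap_comp HX _ _ h3), ccomp_id_l. reflexivity. Qed.

Lemma jD_at_ok (X : ProDObj C D) (HX : ProDObj_ok X) d : ProObj_ok (jD_at X d).
Proof.
  split; simpl; intros.
  - apply HX.
  - apply qmap_comp_id; auto.
Qed.

Lemma jD_atmor_ok (X : ProDObj C D) (HX : ProDObj_ok X) d d' (f : chom D d d') :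
  ProHom_ok (jD_atmor X f).
Proof.
  split; [intros b b' H; exact H |]. intros b b' h h'. simpl.
  rewrite !(qmap_comp HX _ _ h), ccomp_id_l, ccomp_id_r. reflexivity.
Qed.

Lemma jD_obj_ok (X : ProDObj C D) (HX : ProDObj_ok X) : FunObj_ok (jD_obj X).
Proof.
  split; [| split; [| split]]; simpl.
  - apply jD_at_ok; auto.
  - apply jD_atmor_ok; auto.
  - intros d. apply ProHom_eq_pointwise. intros b. simpl. apply HX.
  - intros d d' d'' f g. apply ProHom_eq_pointwise. intros b. symmetry. apply HX.
Qed.

Lemma jD_mor_at_ok (X Y : ProDObj C D) (p : ProDHom X Y) d :
  ProDHom_ok p -> ProHom_ok (jD_mor p d).
Proof. intros [H1 H2]. split; [exact H1 |]. intros b b' h h'. apply H2. Qed.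

Lemma jD_mor_ok (X Y : ProDObj C D) (p : ProDHom X Y) : ProDHom_ok p -> FunHom_ok (jD_mor p).
Proof.
  intros Hp. split; [intros d; apply jD_mor_at_ok; auto |].
  intros d d' f. apply ProHom_eq_pointwise. intros b. simpl. apply (proj2 Hp).
Qed.

Lemma ProDHom_ge_pointwise (X Y : ProDObj C D) (r p : ProDHom X Y) :
  ProDHom_ge r p <->
  (forall b, ple _ (qalpha p b) (qalpha r b)) /\ forall d, ProHom_ge (jD_mor r d) (jD_mor p d).
Proof.
  split.
  - intros [A B]. split; [exact A |]. intros d. split; [exact A |]. intros b h. apply B.
  - intros [A B]. split; [exact A |]. intros b h d. apply (B d).
Qed.

Lemma ProDHom_ok_monotone (X Y : ProDObj C D) (p : ProDHom X Y) : ProDHom_ok p ->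
  forall b b', ple _ b b' -> ple _ (qalpha p b) (qalpha p b').
Proof. intros [H _]. exact (strictly_increasing_monotone H). Qed.

Lemma ProDHom_ge_refl (X Y : ProDObj C D) (HX : ProDObj_ok X) (p : ProDHom X Y) : ProDHom_ge p p.
Proof.
  apply ProDHom_ge_pointwise. split; [intros; apply ple_refl |].
  intros d. apply ProHom_ge_refl, jD_at_ok; auto.
Qed.

Lemma ProDHom_ge_trans (X Y : ProDObj C D) (HX : ProDObj_ok X) (r q p : ProDHom X Y) :
  ProDHom_ge r q -> ProDHom_ge q p -> ProDHom_ge r p.
Proof.
  intros [A1 B1]%ProDHom_ge_pointwise [A2 B2]%ProDHom_ge_pointwise.
  apply ProDHom_ge_pointwise. split; [intros b; eapply ple_trans; eauto |].
  intros d. eapply ProHom_ge_trans; eauto. apply jD_at_ok; auto.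
Qed.

Definition ProDHom_lift (X Y : ProDObj C D) (q : ProDHom X Y) (g : pcar (qidx Y) -> pcar (qidx X))
  (Hg : forall b, ple _ (qalpha q b) (g b)) : ProDHom X Y :=
  Build_ProDHom (qalpha := g)
    (fun b d => ccomp (qphi q b d) (qmap X (g b) (qalpha q b) (Hg b) d d (cid d))).
Arguments ProDHom_lift {X Y} q g Hg.

Lemma ProDHom_ge_lift (X Y : ProDObj C D) (HX : ProDObj_ok X) (q r : ProDHom X Y) g Hg :
  ProDHom_ge r q -> (forall b, ple _ (qalpha r b) (g b)) -> ProDHom_ge (ProDHom_lift q g Hg) r.
Proof.
  intros [A B]%ProDHom_ge_pointwise Hr. apply ProDHom_ge_pointwise. split; [exact Hr |].
  intros d. apply (ProHom_ge_lift (jD_at_ok HX d) (q := jD_mor q d)); [apply B | exact Hr].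
Qed.

Lemma ProDHom_ok_lift (X Y : ProDObj C D) (HX : ProDObj_ok X) (q : ProDHom X Y) g Hg :
  ProDHom_ok q -> strictly_increasing g -> ProDHom_ok (ProDHom_lift q g Hg).
Proof.
  intros Hq Hg'. split; auto. intros b b' h h' d d' f. simpl.
  rewrite ccomp_assoc, (proj2 Hq b b' h (ProDHom_ok_monotone Hq h)), <- !ccomp_assoc.
  f_equal. rewrite !(qmap_comp HX _ _ (ple_trans (Hg b') h')), ccomp_id_l, ccomp_id_r.
  reflexivity.
Qed.

Definition ProDHom_ub (X Y : ProDObj C D) (p q : ProDHom X Y) : Prop :=
  exists r, ProDHom_ge r p /\ ProDHom_ge r q.

Lemma ProDHom_ub_eq (X Y : ProDObj C D) (HX : ProDObj_ok X) (p q : ProDHom X Y) :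
  ProDHom_ok p -> ProDHom_ok q -> ProDHom_ub p q -> ProDHom_eq p q.
Proof.
  intros Hp Hq [r [Hrp Hrq]].
  set (g := majorant (fun b => [qalpha r b])).
  assert (Hgr : forall b, ple _ (qalpha r b) (g b)) by (intros b; apply majorant_ge; left; auto).
  assert (Hg : forall b, ple _ (qalpha p b) (g b)) by (intros b; eapply ple_trans; [apply Hrp | apply Hgr]).
  set (s := ProDHom_lift p g Hg).
  assert (Hs : ProDHom_ok s) by (apply ProDHom_ok_lift, majorant_strictly_increasing; auto).
  assert (Hsr : ProDHom_ge s r) by (apply ProDHom_ge_lift; auto).
  apply rst_trans with s; [apply rst_sym |]; apply rst_step;
    (split; [| split]); auto; eapply ProDHom_ge_trans; eauto.
Qed.

Lemma ProDHom_ub_trans (X Y : ProDObj C D) (HX : ProDObj_ok X) (p q t : ProDHom X Y) :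
  ProDHom_ub p q -> ProDHom_ub q t -> ProDHom_ub p t.
Proof.
  intros [r1 [H1 H2]] [r2 [H3 H4]].
  set (g := majorant (fun b => [qalpha r1 b; qalpha r2 b])).
  assert (G1 : forall b, ple _ (qalpha r1 b) (g b)) by (intros b; apply majorant_ge; simpl; auto).
  assert (G2 : forall b, ple _ (qalpha r2 b) (g b)) by (intros b; apply majorant_ge; simpl; auto).
  assert (Hg : forall b, ple _ (qalpha q b) (g b)) by (intros b; eapply ple_trans; [apply H2 | apply G1]).
  exists (ProDHom_lift q g Hg).
  split; eapply ProDHom_ge_trans; eauto; apply ProDHom_ge_lift; auto.
Qed.

Lemma ProDHom_eq_ub (X Y : ProDObj C D) (HX : ProDObj_ok X) (p q : ProDHom X Y) :
  ProDHom_eq p q -> ProDHom_ub p q.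
Proof.
  induction 1 as [x y [_ [_ H]] | x | x y _ [r [H1 H2]] | x y z _ IH1 _ IH2].
  - exists x. split; auto. apply ProDHom_ge_refl; auto.
  - exists x. split; apply ProDHom_ge_refl; auto.
  - exists r; auto.
  - eapply ProDHom_ub_trans; eauto.
Qed.

Lemma ProDHom_comp_ok (X Y Z : ProDObj C D) (p : ProDHom X Y) (q : ProDHom Y Z) :
  ProDHom_ok p -> ProDHom_ok q -> ProDHom_ok (ProDHom_comp q p).
Proof.
  intros Hp Hq. split; [intros b b' H; apply Hp, Hq, H |].
  intros c c' h h' d d' f. simpl.
  rewrite ccomp_assoc, (proj2 Hq c c' h (ProDHom_ok_monotone Hq h)), <- !ccomp_assoc.
  f_equal. apply Hp.
Qed.

Lemma jD_mor_comp (X Y Z : ProDObj C D) (p : ProDHom X Y) (q : ProDHom Y Z) d :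
  jD_mor (ProDHom_comp q p) d = ProHom_comp (jD_mor q d) (jD_mor p d).
Proof. reflexivity. Qed.

Lemma ProDHom_ge_comp_r (X Y Z : ProDObj C D) (p r : ProDHom X Y) (q : ProDHom Y Z) :
  ProDHom_ge r p -> ProDHom_ge (ProDHom_comp q r) (ProDHom_comp q p).
Proof.
  intros [A B]%ProDHom_ge_pointwise. apply ProDHom_ge_pointwise. split; [intros; apply A |].
  intros d. rewrite !jD_mor_comp. apply ProHom_ge_comp_r, B.
Qed.

Lemma ProDHom_ge_comp_l (X Y Z : ProDObj C D) (p : ProDHom X Y) (q r : ProDHom Y Z) :
  ProDHom_ok p -> ProDHom_ge r q -> ProDHom_ge (ProDHom_comp r p) (ProDHom_comp q p).
Proof.
  intros Hp [A B]%ProDHom_ge_pointwise. apply ProDHom_ge_pointwise.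
  split; [intros c; apply (ProDHom_ok_monotone Hp), A |].
  intros d. rewrite !jD_mor_comp. apply ProHom_ge_comp_l, B. apply jD_mor_at_ok, Hp.
Qed.

Lemma ProDHom_comp_cong (X Y Z : ProDObj C D) (HX : ProDObj_ok X) (HY : ProDObj_ok Y)
  (p p' : ProDHom X Y) (q q' : ProDHom Y Z) :
  ProDHom_ok p -> ProDHom_ok p' -> ProDHom_ok q -> ProDHom_ok q' ->
  ProDHom_eq p p' -> ProDHom_eq q q' -> ProDHom_eq (ProDHom_comp q p) (ProDHom_comp q' p').
Proof.
  intros Hp Hp' Hq Hq' E1 E2. apply ProDHom_ub_eq; auto using ProDHom_comp_ok.
  apply ProDHom_ub_trans with (ProDHom_comp q p'); auto.
  - destruct (ProDHom_eq_ub HX E1) as [r [H1 H2]].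
    exists (ProDHom_comp q r). split; apply ProDHom_ge_comp_r; auto.
  - destruct (ProDHom_eq_ub HY E2) as [r [H1 H2]].
    exists (ProDHom_comp r p'). split; apply ProDHom_ge_comp_l; auto.
Qed.

Lemma ProDHom_eq_pointwise (X Y : ProDObj C D) (a : pcar (qidx Y) -> pcar (qidx X))
  (f g : forall b d, chom C (qdiag X (a b) d) (qdiag Y b d)) :
  (forall b d, f b d = g b d) ->
  ProDHom_eq (Build_ProDHom (qalpha := a) f) (Build_ProDHom (qalpha := a) g).
Proof.
  intros H. replace g with f; [apply rst_refl |].
  do 2 (apply functional_extensionality_dep; intro). auto.
Qed.

Lemma ProDCat_laws : SCatLaws (ProDCat C D).
Proof.
  split; simpl.
  - intros; apply rst_refl.
  - intros; apply rst_sym; auto.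
  - intros; eapply rst_trans; eauto.
  - intros a Ha. split; [intros b b' H; exact H |]. intros b b' h h' d d' f. simpl.
    rewrite ccomp_id_l, ccomp_id_r. apply qmap_irrel.
  - intros. apply ProDHom_comp_ok; auto.
  - intros. apply ProDHom_comp_cong; auto.
  - intros. apply ProDHom_eq_pointwise. intros; simpl; apply ccomp_assoc.
  - intros a b [fa fp] _ _ _. apply ProDHom_eq_pointwise. intros; apply ccomp_id_l.
  - intros a b [fa fp] _ _ _. apply ProDHom_eq_pointwise. intros; apply ccomp_id_r.
Qed.
End ProDCatLaws.
Arguments ProDHom_lift {C D X Y} q g Hg.

Section JFullyFaithful.
Variables C D : Cat.

Lemma jD_functor : IsFunctor (ProDCat C D) (FunCat D (ProCat C)) (@jD_obj C D) (@jD_mor C D).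
Proof.
  split; [| split; [| split; [| split]]]; simpl.
  - intros; apply jD_obj_ok; auto.
  - intros; apply jD_mor_ok; auto.
  - intros X Y f g _ _ _ _ E d.
    induction E as [x y [Hx [Hy G]] | x | x y _ IH | x y z _ IH1 _ IH2].
    + apply rst_step. split; [| split]; [apply jD_mor_at_ok; auto .. |].
      apply ProDHom_ge_pointwise, G.
    + apply rst_refl.
    + apply rst_sym; auto.
    + eapply rst_trans; eauto.
  - intros X _ d. apply rst_refl.
  - intros. apply rst_refl.
Qed.

Lemma jD_faithful (X Y : ProDObj C D) (p q : ProDHom X Y) :
  (exists l : list (cobj D), forall x, In x l) ->
  ProDObj_ok X -> ProDHom_ok p -> ProDHom_ok q ->
  (forall d, ProHom_eq (jD_mor p d) (jD_mor q d)) -> ProDHom_eq p q.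
Proof.
  intros [ds Hds] HX Hp Hq E.
  assert (R : forall d, {r | ProHom_ge r (jD_mor p d) /\ ProHom_ge r (jD_mor q d)}).
  { intros d. apply constructive_indefinite_description, ProHom_eq_ub, E. apply jD_at_ok, HX. }
  set (g := majorant (fun b => qalpha p b :: qalpha q b :: map (fun d => palpha (proj1_sig (R d)) b) ds)).
  assert (Gp : forall b, ple _ (qalpha p b) (g b)) by (intros; apply majorant_ge; simpl; auto).
  assert (Gq : forall b, ple _ (qalpha q b) (g b)) by (intros; apply majorant_ge; simpl; auto).
  assert (Gr : forall d b, ple _ (palpha (proj1_sig (R d)) b) (g b)).
  { intros d b; apply majorant_ge; simpl; right; right. apply in_map_iff. eauto. }
  apply ProDHom_ub_eq; auto. exists (ProDHom_lift p g Gp). split.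
  - apply ProDHom_ge_lift; auto. apply ProDHom_ge_refl; auto.
  - apply ProDHom_ge_pointwise. split; [exact Gq |]. intros d.
    destruct (R d) as [r [Hrp Hrq]] eqn:ER.
    apply (ProHom_ge_trans (jD_at_ok HX d) (q := r)); [| exact Hrq].
    apply (ProHom_ge_lift (jD_at_ok HX d) (q := jD_mor p d)); [exact Hrp |].
    intros b. generalize (Gr d b). rewrite ER. auto.
Qed.
End JFullyFaithful.

(* A natural transformation [eta : j X -> j Y] is the image of a single level
   morphism whose index map dominates all components of [eta] and upper bounds
   witnessing all (finitely many) naturality squares. *)
Section JFull.
Variables C D : Cat.
Variable ds : list (cobj D).
Hypothesis Hds : forall d, In d ds.
Variable homs : forall d d' : cobj D, list (chom D d d').
Hypothesis Hhoms : forall d d' f, In f (homs d d').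
Variables X Y : ProDObj C D.
Variable eta : FunHom (jD_obj X) (jD_obj Y).

Definition naturality_ub d d' (f : chom D d d') : ProHom (jD_at X d) (jD_at Y d') :=
  choose_if (fun r => ProHom_ge r (ProHom_comp (jD_atmor Y f) (eta d)) /\
                      ProHom_ge r (ProHom_comp (eta d') (jD_atmor X f)))
            (ProHom_comp (eta d') (jD_atmor X f)).

Definition preimage_index : pcar (qidx Y) -> pcar (qidx X) :=
  majorant (fun b => flat_map (fun d => palpha (eta d) b ::
    flat_map (fun d' => map (fun f => palpha (naturality_ub f) b) (homs d d')) ds) ds).

Lemma preimage_index_ge_eta d b : ple _ (palpha (eta d) b) (preimage_index b).
Proof. apply majorant_ge, in_flat_map. exists d. simpl; auto. Qed.

Lemma preimage_index_ge_naturality d d' (f : chom D d d') b :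
  ple _ (palpha (naturality_ub f) b) (preimage_index b).
Proof.
  apply majorant_ge, in_flat_map. exists d. split; [auto | right].
  apply in_flat_map. exists d'. split; [auto |]. apply in_map_iff. eauto.
Qed.

Definition jD_preimage : ProDHom X Y :=
  Build_ProDHom (qalpha := preimage_index)
    (fun b d => ccomp (pphi (eta d) b)
       (qmap X (preimage_index b) (palpha (eta d) b) (preimage_index_ge_eta (d := d) b) d d (cid d))).
Hypothesis HX : ProDObj_ok X.
Hypothesis HY : ProDObj_ok Y.
Hypothesis Heta : FunHom_ok eta.

Lemma naturality_ub_spec d d' (f : chom D d d') :
  ProHom_ge (naturality_ub f) (ProHom_comp (jD_atmor Y f) (eta d)) /\
  ProHom_ge (naturality_ub f) (ProHom_comp (eta d') (jD_atmor X f)).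
Proof. unfold naturality_ub. apply choose_if_spec, ProHom_eq_ub, (proj2 Heta). apply jD_at_ok, HX. Qed.

(* Both sides factor through the component of [naturality_ub f] at [b]. *)
Lemma jD_preimage_square d d' (f : chom D d d') b (h : ple _ b b)
  (h' : ple _ (preimage_index b) (preimage_index b)) :
  ccomp (qmap Y b b h d d' f) (qphi jD_preimage b d)
  = ccomp (qphi jD_preimage b d') (qmap X _ _ h' d d' f).
Proof.
  destruct (naturality_ub_spec f) as [[A1 B1] [A2 B2]].
  assert (Hr := preimage_index_ge_naturality f b).
  set (r := naturality_ub f) in *. simpl in *.
  transitivity (ccomp (pphi r b) (qmap X _ _ Hr d d (cid d))).
  - rewrite (B1 b (A1 b)), <- !ccomp_assoc, (qmap_comp_id HX Hr (A1 b) (preimage_index_ge_eta b)).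
    f_equal. apply qmap_irrel.
  - rewrite (B2 b (A2 b)), <- !ccomp_assoc, (qmap_comp_id HX Hr (A2 b) (ple_trans (A2 b) Hr)).
    rewrite !(qmap_comp HX _ _ (ple_trans (A2 b) Hr)), ccomp_id_l, ccomp_id_r. reflexivity.
Qed.

Lemma jD_preimage_at d :
  jD_mor jD_preimage d = ProHom_lift (eta d) preimage_index (preimage_index_ge_eta (d := d)).
Proof. reflexivity. Qed.

Lemma jD_preimage_at_ok d : ProHom_ok (jD_mor jD_preimage d).
Proof.
  rewrite jD_preimage_at. apply ProHom_ok_lift, majorant_strictly_increasing.
  - apply jD_at_ok, HX.
  - apply (proj1 Heta).
Qed.

Lemma jD_preimage_ok : ProDHom_ok jD_preimage.
Proof.
  split; [apply majorant_strictly_increasing |]. intros b b' h h' d d' f.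
  replace (qmap Y b b' h d d' f)
    with (ccomp (qmap Y b' b' (ple_refl b') d d' f) (qmap Y b b' h d d (cid d)))
    by (rewrite (qmap_comp HY _ _ h), ccomp_id_r; reflexivity).
  rewrite <- ccomp_assoc.
  assert (Hnat : ccomp (qmap Y b b' h d d (cid d)) (qphi jD_preimage b d)
                 = ccomp (qphi jD_preimage b' d) (qmap X _ _ h' d d (cid d)))
    by exact (proj2 (jD_preimage_at_ok d) b b' h h').
  rewrite Hnat.
  rewrite ccomp_assoc, (jD_preimage_square f (ple_refl b') (ple_refl _)), <- ccomp_assoc.
  f_equal. rewrite (qmap_comp HX _ _ h'), ccomp_id_r. reflexivity.
Qed.

Lemma jD_preimage_spec d : ProHom_eq (jD_mor jD_preimage d) (eta d).
Proof.
  assert (HXd := jD_at_ok HX d).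
  apply ProHom_ub_eq; [auto | apply jD_preimage_at_ok | apply (proj1 Heta) |].
  exists (jD_mor jD_preimage d). split; [apply ProHom_ge_refl; auto |].
  rewrite jD_preimage_at. apply ProHom_ge_lift; [auto | apply ProHom_ge_refl; auto |].
  apply preimage_index_ge_eta.
Qed.
End JFull.

Lemma length_filter_lt (T : Type) (p q : T -> bool) (l : list T) y :
  (forall x, p x = true -> q x = true) -> In y l -> p y = false -> q y = true ->
  length (filter p l) < length (filter q l).
Proof.
  intros Hpq.
  assert (Hle : forall l, length (filter p l) <= length (filter q l)).
  { induction l0 as [|a l0 IH]; simpl; auto.
    destruct (p a) eqn:E; [rewrite (Hpq _ E); simpl; lia | destruct (q a); simpl; lia]. }
  induction l as [|a l IH]; simpl; [tauto |].
  intros [<- | Hy] Hp Hq; [rewrite Hp, Hq; simpl; specialize (Hle l); lia |].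
  specialize (IH Hy Hp Hq).
  destruct (p a) eqn:E; [rewrite (Hpq _ E); simpl; lia | destruct (q a); simpl; lia].
Qed.

Definition fun_update (T : Type) (B : T -> Type) (g : forall t, B t) (t0 : T) (x : B t0) :
  forall t, B t :=
  fun t => match decide (t0 = t) with left e => eq_rect t0 B x t e | right _ => g t end.
Arguments fun_update {T B} g t0 x.

Lemma finite_dep_functions (T : Type) (B : T -> Type) (ts : list T) (Hts : forall t, In t ts)
  (l : forall t, list (B t)) (S : (forall t, B t) -> Prop)
  (HS : forall g, S g -> forall t, In (g t) (l t)) :
  exists L, forall g, S g -> In g L.
Proof.
  assert (Hagree : forall ts', exists L, forall g, S g ->
            exists g', In g' L /\ forall t, In t ts' -> g' t = g t).
  { induction ts' as [|t0 ts' [L HL]].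
    - destruct (classic (exists g, S g)) as [[g0 H0] | N].
      + exists [g0]. intros g _. exists g0. simpl; intuition.
      + exists []. intros g Hg. exfalso; eauto.
    - exists (flat_map (fun g' : forall t, B t => map (fun x : B t0 => fun_update g' t0 x) (l t0)) L).
      intros g Hg. destruct (HL g Hg) as [g' [Hin Hag]].
      exists (fun_update g' t0 (g t0)). split.
      + apply in_flat_map. exists g'. split; auto. apply in_map_iff. exists (g t0); auto.
      + intros t Ht. unfold fun_update. destruct (decide (t0 = t)) as [<- | ne]; [reflexivity |].
        destruct Ht as [<- | Ht]; [contradiction | auto]. }
  destruct (Hagree ts) as [L HL]. exists L. intros g Hg. destruct (HL g Hg) as [g' [Hin Hag]].
  replace g with g'; auto. apply functional_extensionality_dep; auto.
Qed.

Section StronglyLoopless.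
Variable D : Cat.
Hypothesis HDsl : StronglyLoopless D.
Variable ds : list (cobj D).
Hypothesis Hds : forall d, In d ds.

Definition below (d' d : cobj D) : Prop := d <> d' /\ inhabited (chom D d d').

Lemma below_trans d d' d'' : below d'' d' -> below d' d -> below d'' d.
Proof.
  intros [N1 [g]] [N2 [f]]. split; [| exact (inhabits (ccomp g f))].
  intros ->. apply N2, (proj2 HDsl). exists f, g. split; apply (proj1 HDsl).
Qed.

Definition n_below (d : cobj D) : nat :=
  length (filter (fun e => if decide (below e d) then true else false) ds).

Lemma below_wf : well_founded below.
Proof.
  apply (wf_incl _ _ (fun x y => n_below x < n_below y)); [| apply (well_founded_ltof _ n_below)].
  intros d' d H. apply length_filter_lt with d'; [| auto | ..].
  - intros x. destruct (decide (below x d')), (decide (below x d)); eauto using below_trans.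
  - destruct (decide (below d' d')) as [[N _] |]; congruence.
  - destruct (decide (below d' d)); [reflexivity | contradiction].
Qed.
End StronglyLoopless.

Section EssentialImage.
Variables C D : Cat.
Hypothesis HDsl : StronglyLoopless D.
Variable ds : list (cobj D).
Hypothesis Hds : forall d, In d ds.
Variable homs : forall d d' : cobj D, list (chom D d d').
Hypothesis Hhoms : forall d d' f, In f (homs d d').
Variable Y : FunObj D (ProCat C).

Let A (d : cobj D) : DirPoset := pidx (fo Y d).
Let af d d' (f : chom D d d') : pcar (A d') -> pcar (A d) := palpha (fm Y f).

Definition functoriality_ub d d' d'' (f : chom D d d') (g : chom D d' d'') :
  ProHom (fo Y d) (fo Y d'') :=
  choose_if (fun r => ProHom_ge r (fm Y (ccomp g f)) /\ ProHom_ge r (ProHom_comp (fm Y g) (fm Y f)))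
            (fm Y (ccomp g f)).

Definition Tuple := forall d, pcar (A d).

(* Compatibility makes the transition maps of [hD] below well defined and
   functorial; identities need no condition since [D] is loopless. *)
Definition compatible (a : Tuple) : Prop :=
  (forall d d' (f : chom D d d'), d <> d' -> ple (A d) (af f (a d')) (a d)) /\
  (forall d d' d'' (f : chom D d d') (g : chom D d' d''), d <> d' -> d' <> d'' ->
      ple (A d) (palpha (functoriality_ub f g) (a d'')) (a d)).

Definition compatible_ub_step (lb : forall d, list (pcar (A d))) (d : cobj D)
  (rec : forall d', below d' d -> pcar (A d')) : pcar (A d) :=
  strict_ub (lb d ++ flat_map (fun d' => match decide (below d' d) with
     | left H => map (fun f => af f (rec d' H)) (homs d d') ++
         flat_map (fun d'' => match decide (below d'' d) with
            | left H2 => flat_map (fun f => map (fun g => palpha (functoriality_ub f g) (rec d'' H2))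
                             (homs d' d'')) (homs d d')
            | right _ => [] end) ds
     | right _ => [] end) ds).

Definition compatible_ub (lb : forall d, list (pcar (A d))) : Tuple :=
  Fix (below_wf HDsl Hds) (fun d => pcar (A d)) (compatible_ub_step lb).

Lemma compatible_ub_eq lb d : compatible_ub lb d = compatible_ub_step lb (fun d' _ => compatible_ub lb d').
Proof.
  unfold compatible_ub. rewrite Fix_eq; [reflexivity |].
  intros x f g Hfg. f_equal. do 2 (apply functional_extensionality_dep; intro). auto.
Qed.

Lemma compatible_ub_ge lb d x : In x (lb d) -> ple (A d) x (compatible_ub lb d).
Proof. intros H. rewrite compatible_ub_eq. apply ple_strict_ub, in_or_app; auto. Qed.

Lemma compatible_ub_compatible lb : compatible (compatible_ub lb).
Proof.
  split.
  - intros d d' f N. rewrite (compatible_ub_eq lb d). apply ple_strict_ub, in_or_app. right.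
    apply in_flat_map. exists d'. split; auto. destruct (decide (below d' d)) as [H | H].
    + apply in_or_app. left. apply in_map_iff. exists f; auto.
    + exfalso. apply H. split; [auto | exact (inhabits f)].
  - intros d d' d'' f g N1 N2. rewrite (compatible_ub_eq lb d). apply ple_strict_ub, in_or_app. right.
    apply in_flat_map. exists d'. split; auto. destruct (decide (below d' d)) as [H | H].
    + apply in_or_app. right. apply in_flat_map. exists d''. split; auto.
      destruct (decide (below d'' d)) as [H2 | H2].
      * apply in_flat_map. exists f. split; auto. apply in_map_iff. exists g; auto.
      * exfalso. apply H2, below_trans with d'; auto. split; [auto | exact (inhabits g)].
    + exfalso. apply H. split; [auto | exact (inhabits f)].
Qed.

(* The counter component only serves to make the index poset of infinite height. *)
Definition CTuple := {x : Tuple * nat | compatible (fst x)}.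
Definition ctuple_at (d : cobj D) (p : CTuple) : pcar (A d) := fst (proj1_sig p) d.
Definition ctuple_le (x y : CTuple) : Prop :=
  (forall d, ple (A d) (ctuple_at d x) (ctuple_at d y)) /\ snd (proj1_sig x) <= snd (proj1_sig y).

Lemma ctuple_le_refl x : ctuple_le x x.
Proof. split; auto. intros; apply ple_refl. Qed.

Lemma ctuple_le_trans x y z : ctuple_le x y -> ctuple_le y z -> ctuple_le x z.
Proof. intros [A1 B1] [A2 B2]. split; [intros d; eapply ple_trans; eauto | lia]. Qed.

Lemma ctuple_le_antisym x y : ctuple_le x y -> ctuple_le y x -> x = y.
Proof.
  destruct x as [[a n] Ha], y as [[b m] Hb]. intros [A1 B1] [A2 B2]; unfold ctuple_at in *; simpl in *.
  assert (a = b) by (apply functional_extensionality_dep; intro d; apply ple_antisym; auto).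
  assert (n = m) by lia. subst. f_equal. apply proof_irrelevance.
Qed.

Lemma ctuple_le_cofinite u : exists l : list CTuple, forall v, ctuple_le v u -> In v l.
Proof.
  destruct (finite_dep_functions (B := fun d => pcar (A d)) Hds (l := fun d => preds (ctuple_at d u))
     (S := fun g => exists v, ctuple_le v u /\ fst (proj1_sig v) = g)) as [L HL].
  { intros g [v [[Hv _] <-]] t. apply in_preds, Hv. }
  exists (flat_map (fun g => flat_map (fun k => match decide (compatible g) with
            left H => [exist _ (g, k) H] | right _ => [] end) (seq 0 (S (snd (proj1_sig u))))) L).
  intros v Hv. apply in_flat_map. exists (fst (proj1_sig v)). split; [apply HL; eauto |].
  apply in_flat_map. exists (snd (proj1_sig v)). split; [apply in_seq; destruct Hv; lia |].
  destruct v as [[g k] Hg]; simpl. destruct (decide (compatible g)) as [H | N]; [| contradiction].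
  left. f_equal. apply proof_irrelevance.
Qed.

Definition ctuple_above (lb : forall d, list (pcar (A d))) (n : nat) : CTuple :=
  exist _ (compatible_ub lb, n) (compatible_ub_compatible lb).

Lemma ctuple_le_directed u v : exists w, ctuple_le u w /\ ctuple_le v w.
Proof.
  exists (ctuple_above (fun d => [ctuple_at d u; ctuple_at d v])
            (Nat.max (snd (proj1_sig u)) (snd (proj1_sig v)))).
  split; split; simpl; try lia; intros d; apply compatible_ub_ge; simpl; auto.
Qed.

Lemma ctuple_le_inf_height n :
  exists c : nat -> CTuple, forall i, i < n -> ctuple_le (c i) (c (S i)) /\ c i <> c (S i).
Proof.
  exists (fun i => ctuple_above (fun _ => []) i). intros i _. split.
  - split; simpl; auto. intros; apply ple_refl.
  - intros E. apply (f_equal (fun p => snd (proj1_sig p))) in E. simpl in E. lia.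
Qed.

Definition hD_idx : DirPoset :=
  Build_DirPoset ctuple_le_refl ctuple_le_trans ctuple_le_antisym ctuple_le_cofinite
    ctuple_le_directed ctuple_le_inf_height.

Lemma ctuple_at_mono d (u v : pcar hD_idx) : ple hD_idx v u -> ple (A d) (ctuple_at d v) (ctuple_at d u).
Proof. intros [H _]. apply H. Qed.

Lemma ctuple_at_compatible (v : pcar hD_idx) d d' (f : chom D d d') :
  d <> d' -> ple (A d) (af f (ctuple_at d' v)) (ctuple_at d v).
Proof. intros N. apply (proj1 (proj2_sig v)); auto. Qed.

Lemma ctuple_at_compatible_comp (w : pcar hD_idx) d d' d'' (f : chom D d d') (g : chom D d' d'') :
  d <> d' -> d' <> d'' -> ple (A d) (palpha (functoriality_ub f g) (ctuple_at d'' w)) (ctuple_at d w).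
Proof. intros. apply (proj2 (proj2_sig w)); auto. Qed.

Definition hD_map (u v : pcar hD_idx) (h : ple hD_idx v u) (d d' : cobj D) (f : chom D d d') :
  chom C (pdiag (fo Y d) (ctuple_at d u)) (pdiag (fo Y d') (ctuple_at d' v)) :=
  match decide (d = d') with
  | left e => eq_rect d (fun d' => chom C (pdiag (fo Y d) (ctuple_at d u)) (pdiag (fo Y d') (ctuple_at d' v)))
               (pmap (fo Y d) _ _ (ctuple_at_mono d h)) d' e
  | right ne => ccomp (pphi (fm Y f) (ctuple_at d' v))
        (pmap (fo Y d) _ _ (ple_trans (ctuple_at_compatible v f ne) (ctuple_at_mono d h)))
  end.

Definition hD : ProDObj C D :=
  @Build_ProDObj C D hD_idx (fun p d => pdiag (fo Y d) (ctuple_at d p)) hD_map.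

Lemma hD_map_diag (u v : pcar hD_idx) h d (f : chom D d d) H :
  hD_map (u := u) (v := v) h f = pmap (fo Y d) (ctuple_at d u) (ctuple_at d v) H.
Proof.
  unfold hD_map. destruct (decide (d = d)) as [e | N]; [| congruence].
  rewrite (proof_irrelevance _ e eq_refl). apply pmap_irrel.
Qed.

Lemma hD_map_offdiag (u v : pcar hD_idx) h d d' (f : chom D d d') (N : d <> d') H :
  hD_map h f = ccomp (pphi (fm Y f) (ctuple_at d' v)) (pmap (fo Y d) (ctuple_at d u) _ H).
Proof.
  unfold hD_map. destruct (decide (d = d')) as [e | N']; [contradiction |]. f_equal. apply pmap_irrel.
Qed.
Arguments hD_map_diag {u v} h {d} f H.
Arguments hD_map_offdiag {u v} h {d d'} f N H.

Section ValidY.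
Hypothesis HY : FunObj_ok Y.

Lemma fo_ok d : ProObj_ok (fo Y d).
Proof. apply HY. Qed.

Lemma fm_ok d d' (f : chom D d d') : ProHom_ok (fm Y f).
Proof. apply HY. Qed.

Lemma fm_natural d d' (f : chom D d d') b b' h h' :
  ccomp (pmap (fo Y d') b b' h) (pphi (fm Y f) b) = ccomp (pphi (fm Y f) b') (pmap (fo Y d) _ _ h').
Proof. apply (proj2 (fm_ok f)). Qed.
Arguments fm_natural {d d'} f {b b'} h h'.

Lemma functoriality_ub_spec d d' d'' (f : chom D d d') (g : chom D d' d'') :
  ProHom_ge (functoriality_ub f g) (fm Y (ccomp g f)) /\
  ProHom_ge (functoriality_ub f g) (ProHom_comp (fm Y g) (fm Y f)).
Proof. unfold functoriality_ub. apply choose_if_spec, ProHom_eq_ub, HY. apply fo_ok. Qed.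

Lemma loop_id d (f : chom D d d) : f = cid d.
Proof. apply (proj1 HDsl). Qed.

(* The composite of two off-diagonal maps is compared with the one for [g o f]
   through the common upper bound [functoriality_ub f g], which sits below the
   relevant index by compatibility. *)
Lemma hD_map_comp_offdiag u v w h1 h2 h3 d d' d'' (f : chom D d d') (g : chom D d' d'') :
  d <> d' -> d' <> d'' ->
  ccomp (hD_map (u := v) (v := w) h2 g) (hD_map (u := u) h1 f) = hD_map h3 (ccomp g f).
Proof.
  intros n1 n2.
  assert (n3 : d <> d'').
  { intros E. apply (proj1 (below_trans HDsl (conj n2 (inhabits g)) (conj n1 (inhabits f)))). auto. }
  rewrite (hD_map_offdiag h1 f n1 (ple_trans (ctuple_at_compatible v f n1) (ctuple_at_mono d h1))).
  rewrite (hD_map_offdiag h2 g n2 (ple_trans (ctuple_at_compatible w g n2) (ctuple_at_mono d' h2))).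
  rewrite (hD_map_offdiag h3 (ccomp g f) n3
             (ple_trans (ctuple_at_compatible w (ccomp g f) n3) (ctuple_at_mono d h3))).
  destruct (functoriality_ub_spec f g) as [[A1 B1] [A2 B2]].
  assert (Hr := ctuple_at_compatible_comp w f g n1 n2).
  set (r := functoriality_ub f g) in *. simpl in A2, B2.
  assert (Hr' : ple _ (palpha r (ctuple_at d'' w)) (ctuple_at d u)) by exact (ple_trans Hr (ctuple_at_mono d h3)).
  assert (hp : ple (A d') (af g (ctuple_at d'' w)) (ctuple_at d' v))
    by exact (ple_trans (ctuple_at_compatible w g n2) (ctuple_at_mono d' h2)).
  unfold af in *.
  rewrite <- ccomp_assoc, (ccomp_assoc _ (pphi (fm Y f) (ctuple_at d' v))).
  rewrite (fm_natural f _ (ProHom_ok_monotone (fm_ok f) hp)).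
  rewrite <- ccomp_assoc, (pmap_comp (fo_ok d) _ _ (ple_trans (A2 _) Hr')).
  rewrite <- (pmap_comp (fo_ok d) Hr' (A2 _) _).
  rewrite !ccomp_assoc, <- (B2 _ (A2 _)), (B1 _ (A1 _)).
  rewrite <- ccomp_assoc. f_equal. apply pmap_comp, fo_ok.
Qed.

Lemma hD_ok : ProDObj_ok hD.
Proof.
  split.
  - intros u h d. simpl. rewrite (hD_map_diag h (cid d) (ctuple_at_mono d h)). apply pmap_refl, fo_ok.
  - intros u v w h1 h2 h3 d d' d'' f g. simpl.
    destruct (decide (d = d')) as [e1 | n1], (decide (d' = d'')) as [e2 | n2].
    + subst d' d''. rewrite (loop_id f), (loop_id g), ccomp_id_l, (hD_map_diag h1 (cid d) (ctuple_at_mono d h1)),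
        (hD_map_diag h2 (cid d) (ctuple_at_mono d h2)), (hD_map_diag h3 (cid d) (ctuple_at_mono d h3)).
      apply pmap_comp, fo_ok.
    + subst d'. rewrite (loop_id f), ccomp_id_r, (hD_map_diag h1 (cid d) (ctuple_at_mono d h1)).
      rewrite (hD_map_offdiag h2 g n2 (ple_trans (ctuple_at_compatible w g n2) (ctuple_at_mono d h2))).
      rewrite (hD_map_offdiag h3 g n2 (ple_trans (ctuple_at_compatible w g n2) (ctuple_at_mono d h3))).
      rewrite <- ccomp_assoc. f_equal. apply pmap_comp, fo_ok.
    + subst d''. rewrite (loop_id g), ccomp_id_l, (hD_map_diag h2 (cid d') (ctuple_at_mono d' h2)).
      rewrite (hD_map_offdiag h1 f n1 (ple_trans (ctuple_at_compatible v f n1) (ctuple_at_mono d h1))).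
      rewrite (hD_map_offdiag h3 f n1 (ple_trans (ctuple_at_compatible w f n1) (ctuple_at_mono d h3))).
      rewrite ccomp_assoc, (fm_natural f _ (ProHom_ok_monotone (fm_ok f) (ctuple_at_mono d' h2))).
      rewrite <- ccomp_assoc. f_equal. apply pmap_comp, fo_ok.
    + apply hD_map_comp_offdiag; auto.
Qed.

Unset Implicit Arguments.

Definition point_bounds d (a : pcar (A d)) : forall e, list (pcar (A e)) :=
  fun e => match decide (d = e) with
           | left H => [eq_rect d (fun e => pcar (A e)) a e H] | right _ => [] end.

Lemma ctuple_above_point_ge d a : ple (A d) a (ctuple_at d (ctuple_above (point_bounds d a) 0)).
Proof.
  apply compatible_ub_ge. unfold point_bounds. destruct (decide (d = d)) as [e | N]; [| congruence].
  rewrite (proof_irrelevance _ e eq_refl). left; reflexivity.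
Qed.

Definition embed_index d : pcar (A d) -> pcar hD_idx :=
  @majorant (A d) hD_idx (fun a => [ctuple_above (point_bounds d a) 0]).

Lemma embed_index_ge d a : ple (A d) a (ctuple_at d (embed_index d a)).
Proof.
  eapply ple_trans; [apply ctuple_above_point_ge |].
  apply ctuple_at_mono, majorant_ge. left; reflexivity.
Qed.

Definition project_index d : pcar hD_idx -> pcar (A d) :=
  @majorant hD_idx (A d) (fun p => [ctuple_at d p]).

Lemma project_index_ge d p : ple (A d) (ctuple_at d p) (project_index d p).
Proof. apply majorant_ge. left; reflexivity. Qed.

Definition hD_counit : FunHom (jD_obj hD) Y := fun d =>
  @Build_ProHom C (jD_at hD d) (fo Y d) (embed_index d)
    (fun a => pmap (fo Y d) _ a (embed_index_ge d a)).

Definition hD_counit_inv : FunHom Y (jD_obj hD) := fun d =>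
  @Build_ProHom C (fo Y d) (jD_at hD d) (project_index d)
    (fun p => pmap (fo Y d) _ (ctuple_at d p) (project_index_ge d p)).

Lemma hD_map_diag_id (u v : pcar hD_idx) h d :
  hD_map (u := u) (v := v) h (cid d) = pmap (fo Y d) _ _ (ctuple_at_mono d h).
Proof. apply hD_map_diag. Qed.

Ltac pmap_normalize d :=
  repeat (rewrite <- ?ccomp_assoc;
          first [rewrite (pmap_comp_trans (fo_ok d)) | rewrite (pmap_comp_trans_assoc (fo_ok d))]).

Lemma hD_counit_at_ok d : ProHom_ok (hD_counit d).
Proof.
  split; [apply majorant_strictly_increasing |]. intros b b' h h'. simpl.
  rewrite hD_map_diag_id. pmap_normalize d. apply pmap_irrel.
Qed.

Lemma hD_counit_inv_at_ok d : ProHom_ok (hD_counit_inv d).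
Proof.
  split; [apply majorant_strictly_increasing |]. intros b b' h h'. simpl.
  rewrite hD_map_diag_id. pmap_normalize d. apply pmap_irrel.
Qed.

Let LP := ProCat_laws C.
Let HX := hD_ok.

Ltac ok_tac := first [ apply fo_ok | apply fm_ok | apply (jD_at_ok HX) | apply (jD_atmor_ok HX)
  | apply hD_counit_at_ok | apply hD_counit_inv_at_ok | apply (sid_ok LP); ok_tac ].

Lemma hD_counit_natural d d' (f : chom D d d') :
  ProHom_eq (ProHom_comp (fm Y f) (hD_counit d)) (ProHom_comp (hD_counit d') (jD_atmor hD f)).
Proof.
  destruct (decide (d = d')) as [<- | N].
  - rewrite (loop_id f). eapply (sheq_trans LP); [| apply (sheq_sym LP)].
    + apply (scomp_equiv_id_l LP); [apply HY | ok_tac ..].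
    + apply (scomp_equiv_id_r LP); [apply (jD_obj_ok HX) | ok_tac ..].
  - set (g := @majorant (A d') hD_idx (fun b => [embed_index d (af f b); embed_index d' b])).
    assert (G1 : forall b, ple hD_idx (embed_index d (af f b)) (g b)) by (intros; apply majorant_ge; simpl; auto).
    assert (G2 : forall b, ple hD_idx (embed_index d' b) (g b)) by (intros; apply majorant_ge; simpl; auto).
    assert (HH : forall b, ple (A d) (af f b) (ctuple_at d (g b))).
    { intros b. eapply ple_trans; [apply embed_index_ge | apply ctuple_at_mono, G1]. }
    apply ProHom_ub_eq; [ok_tac | apply ProHom_comp_ok; ok_tac .. |].
    exists (@Build_ProHom C (jD_at hD d) (fo Y d') g
              (fun b => ccomp (pphi (fm Y f) b) (pmap (fo Y d) (ctuple_at d (g b)) (af f b) (HH b)))).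
    split.
    + split; [exact G1 |]. intros b h. simpl. rewrite hD_map_diag_id. unfold af in *.
      rewrite <- ccomp_assoc. pmap_normalize d. apply ccomp_pmap_irrel.
    + split; [exact G2 |]. intros b h. simpl. rewrite hD_map_diag_id.
      rewrite (hD_map_offdiag _ f N (ctuple_at_compatible _ f N)). unfold af in *.
      rewrite <- !ccomp_assoc, (ccomp_assoc _ (pphi (fm Y f) _) (pmap (fo Y d') _ _ _)).
      rewrite (fm_natural f _ (ProHom_ok_monotone (fm_ok f) (embed_index_ge d' b))).
      rewrite <- !ccomp_assoc. pmap_normalize d. apply ccomp_pmap_irrel.
Qed.

Lemma hD_counit_inv_natural d d' (f : chom D d d') :
  ProHom_eq (ProHom_comp (jD_atmor hD f) (hD_counit_inv d)) (ProHom_comp (hD_counit_inv d') (fm Y f)).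
Proof.
  destruct (decide (d = d')) as [<- | N].
  - rewrite (loop_id f). eapply (sheq_trans LP); [| apply (sheq_sym LP)].
    + apply (scomp_equiv_id_l LP); [apply (jD_obj_ok HX) | ok_tac ..].
    + apply (scomp_equiv_id_r LP); [apply HY | ok_tac ..].
  - set (g := @majorant hD_idx (A d) (fun p => [project_index d p; af f (project_index d' p)])).
    assert (G1 : forall p, ple (A d) (project_index d p) (g p)) by (intros; apply majorant_ge; simpl; auto).
    assert (G2 : forall p, ple (A d) (af f (project_index d' p)) (g p)) by (intros; apply majorant_ge; simpl; auto).
    assert (HH : forall p, ple (A d) (af f (ctuple_at d' p)) (g p)).
    { intros p. eapply ple_trans; [apply (ctuple_at_compatible p f N) |].
      eapply ple_trans; [apply project_index_ge | apply G1]. }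
    apply ProHom_ub_eq; [ok_tac | apply ProHom_comp_ok; ok_tac .. |].
    exists (@Build_ProHom C (fo Y d) (jD_at hD d') g
              (fun p => ccomp (pphi (fm Y f) (ctuple_at d' p)) (pmap (fo Y d) (g p) (af f (ctuple_at d' p)) (HH p)))).
    split.
    + split; [exact G1 |]. intros p h. simpl.
      rewrite (hD_map_offdiag _ f N (ctuple_at_compatible _ f N)). unfold af in *.
      rewrite <- !ccomp_assoc. pmap_normalize d. apply ccomp_pmap_irrel.
    + split; [exact G2 |]. intros p h. simpl. unfold af in *.
      rewrite <- !ccomp_assoc, (ccomp_assoc _ (pphi (fm Y f) _) (pmap (fo Y d') _ _ _)).
      rewrite (fm_natural f _ (ProHom_ok_monotone (fm_ok f) (project_index_ge d' p))).
      rewrite <- !ccomp_assoc. pmap_normalize d. apply ccomp_pmap_irrel.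
Qed.

Lemma hD_counit_inv_counit d :
  ProHom_eq (ProHom_comp (hD_counit_inv d) (hD_counit d)) (ProHom_id (jD_at hD d)).
Proof.
  set (g := @majorant hD_idx hD_idx (fun p => [p; embed_index d (project_index d p)])).
  assert (G1 : forall p, ple hD_idx p (g p)) by (intros; apply majorant_ge; simpl; auto).
  assert (G2 : forall p, ple hD_idx (embed_index d (project_index d p)) (g p))
    by (intros; apply majorant_ge; simpl; auto).
  apply ProHom_ub_eq; [ok_tac | apply ProHom_comp_ok; ok_tac | ok_tac |].
  exists (@Build_ProHom C (jD_at hD d) (jD_at hD d) g
            (fun p => pmap (fo Y d) (ctuple_at d (g p)) (ctuple_at d p) (ctuple_at_mono d (G1 p)))).
  split.
  - split; [exact G2 |]. intros p h. simpl. rewrite hD_map_diag_id. pmap_normalize d. apply pmap_irrel.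
  - split; [exact G1 |]. intros p h. simpl. rewrite hD_map_diag_id, ccomp_id_l. apply pmap_irrel.
Qed.

Lemma hD_counit_counit_inv d :
  ProHom_eq (ProHom_comp (hD_counit d) (hD_counit_inv d)) (ProHom_id (fo Y d)).
Proof.
  set (g := @majorant (A d) (A d) (fun a => [a; project_index d (embed_index d a)])).
  assert (G1 : forall a, ple (A d) a (g a)) by (intros; apply majorant_ge; simpl; auto).
  assert (G2 : forall a, ple (A d) (project_index d (embed_index d a)) (g a))
    by (intros; apply majorant_ge; simpl; auto).
  apply ProHom_ub_eq; [ok_tac | apply ProHom_comp_ok; ok_tac | ok_tac |].
  exists (@Build_ProHom C (fo Y d) (fo Y d) g (fun a => pmap (fo Y d) (g a) a (G1 a))).
  split.
  - split; [exact G2 |]. intros a h. simpl. pmap_normalize d. apply pmap_irrel.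
  - split; [exact G1 |]. intros a h. simpl. rewrite ccomp_id_l. apply pmap_irrel.
Qed.

Lemma hD_counit_iso :
  FunHom_ok hD_counit /\ FunHom_ok hD_counit_inv /\
  (forall d, ProHom_eq (ProHom_comp (hD_counit_inv d) (hD_counit d)) (ProHom_id (jD_at hD d))) /\
  (forall d, ProHom_eq (ProHom_comp (hD_counit d) (hD_counit_inv d)) (ProHom_id (fo Y d))).
Proof.
  split; [| split; [| split]].
  - split; [apply hD_counit_at_ok | apply hD_counit_natural].
  - split; [apply hD_counit_inv_at_ok | apply hD_counit_inv_natural].
  - apply hD_counit_inv_counit.
  - apply hD_counit_counit_inv.
Qed.
End ValidY.
End EssentialImage.

Theorem corollary3p26 (C D : Cat) (HDfin : FiniteCat D) (HDsl : StronglyLoopless D) :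
  IsEquivalence (ProDCat C D) (FunCat D (ProCat C))
    (@jD_obj C D) (@jD_mor C D).
Proof.
  destruct HDfin as [Hobj Hmor].
  destruct (constructive_indefinite_description _ Hobj) as [ds Hds].
  set (homs := fun d d' => proj1_sig (constructive_indefinite_description _ (Hmor d d'))).
  assert (Hhoms : forall d d' f, In f (homs d d'))
    by (intros d d' f; exact (proj2_sig (constructive_indefinite_description _ (Hmor d d')) f)).
  apply (equivalence_of_fully_faithful_ess_surj _ _ (ProDCat_laws C D) (FunCat_laws D (ProCat_laws C))
           _ _ (jD_functor C D)) with
    (J_pre := fun X Y eta => jD_preimage Hds homs eta) (K := hD HDsl Hds Hhoms)
    (eps := hD_counit C D HDsl ds Hds homs Hhoms) (eps' := hD_counit_inv C D HDsl ds Hds homs Hhoms).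
  - intros X Y p q HX _ Hp Hq. apply jD_faithful; auto.
  - intros X Y eta HX HY Heta. split; [apply jD_preimage_ok | intros d; apply jD_preimage_spec]; auto.
  - intros Y HY. apply hD_ok, HY.
  - intros Y HY. apply hD_counit_iso, HY.
Qed.
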